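(* Let $h$ be an admissible perturbation. Then $\psi^h$ is strictly convex on $\Pi_h$, its unique minimizer $\pi^h$ lies in $\mathrm{int}(\Pi_h)$ and satisfies $F^h(A\pi^h)=\pi^h$. Moreover, for every $\pi\in\mathrm{int}(\Pi_h)$ one has $F^h(A\pi)\in\mathrm{int}(\Pi_h)$ and $$\Upsilon(\pi):=\big(\tilde\nabla h(F^h(A\pi))-\tilde\nabla h(\pi)\big)'\big(F^h(A\pi)-\pi\big)\ge0,$$ with equality if and only if $\pi=\pi^h$.
   Context: Network: $\mathcal G=(\mathcal V,\mathcal E)$ is a finite directed graph with $\mathcal V=\{0,1,\dots,n\}$, containing no directed cycle, in which node $0$ is the unique node with no incoming link, node $n$ is the unique node with no outgoing link, there is a directed path from every node to $n$, and every link $(u,v)\in\mathcal E$ satisfies $u<v$. Each link $e$ has a flow-density function $\mu_e:[0,\infty)\to[0,\infty)$ that is continuously differentiable, strictly increasing, strictly concave, with $\mu_e(0)=0$ and $\mu_e'(0)<\infty$; its capacity is $C_e:=\lim_{\rho\to\infty}\mu_e(\rho)\in(0,+\infty]$; $\mathcal F:=\prod_{e\in\mathcal E}[0,C_e)$. The delay is $T_e(f_e)=\mu_e^{-1}(f_e)/f_e$ for $0<f_e<C_e$, $T_e(0)=1/\mu_e'(0)$, $T_e(f_e)=+\infty$ for $f_e\ge C_e$; $T(f):=(T_e(f_e))_e$. $\mathcal P$ is the set of directed paths from $0$ to $n$, $A\in\{0,1\}^{\mathcal E\times\mathcal P}$ the link-path incidence matrix ($A_{ep}=1$ iff $e\in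 p$), $\mathcal S(\mathcal P)=\{\pi\in\mathbb R_+^{\mathcal P}:\sum_p\pi_p=1\}$, $\Pi:=\{\pi\in\mathcal S(\mathcal P):(A\pi)_e<C_e\ \forall e\}$. The min-cut capacity $C^*:=\min\{\sum_{(u,v)\in\mathcal E:u\in\mathcal U,v\notin\mathcal U}C_{(u,v)}:\mathcal U\subseteq\mathcal V,0\in\mathcal U,n\notin\mathcal U\}$ is assumed to satisfy $C^*>1$. Perturbation: $\Phi:=I-|\mathcal P|^{-1}\mathbf 1\mathbf 1'$; interiors $\mathrm{int}$ and boundaries $\partial$ of subsets of $\mathcal S(\mathcal P)$ are relative to the hyperplane $\{x:\mathbf 1'x=1\}$. An admissible perturbation is a function $h:\Pi_h\to\mathbb R$, where $\Pi_h\subseteq\Pi$ is closed in $\mathbb R^{\mathcal P}$, convex, with nonempty interior, $h$ is strictly convex, twice differentiable on $\mathrm{int}(\Pi_h)$, and $\|\tilde\nabla h(\pi)\|\to+\infty$ as $\pi\to\partial\Pi_h$, where $\tilde\nabla h:=\Phi\nabla h$. Its perturbed best response is $F^h(f):=\arg\min_{\omega\in\Pi_h}\{\omega'A'T(f)+h(\omega)\}$ for $f\in\mathcal F$. Define $\psi^h(\pi):=\sum_{e\in\mathcal E}\int_0^{(A\pi)_e}T_e(s)\,ds+h(\pi)$ for $\pi\in\Pi_h$. *)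

From Stdlib Require Import Reals Lra List ClassicalEpsilon.
Import ListNotations.
Open Scope R_scope.

Definition edge := (nat * nat)%type.
Definition path := list edge.

Definition edge_eq_dec : forall x y : edge, {x = y} + {x <> y}.
Proof. decide equality; apply Nat.eq_dec. Defined.

Definition lsum {A : Type} (l : list A) (f : A -> R) : R :=
  fold_right (fun a s => f a + s) 0 l.

Fixpoint walk (E : list edge) (a b : nat) (p : path) : Prop :=
  match p with
  | [] => a = b
  | (u, v) :: q => u = a /\ In (u, v) E /\ walk E v b q
  end.

Definition network (n : nat) (E : list edge) : Prop :=
  NoDup E /\
  (forall u v, In (u, v) E -> (u < v)%nat /\ (v <= n)%nat) /\
  (forall v, (v <= n)%nat -> ((forall u, ~ In (u, v) E) <-> v = 0%nat)) /\
  (forall u, (u <= n)%nat -> ((forall v, ~ In (u, v) E) <-> u = n)) /\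
  (forall u, (u <= n)%nat -> exists p, walk E u n p).

Definition path_enum (n : nat) (E : list edge) (P : list path) : Prop :=
  NoDup P /\ forall p, In p P <-> walk E 0 n p.

(* flow-density function m on [0,oo) with derivative m' (right derivative at 0) *)
Definition flow_density (m m' : R -> R) : Prop :=
  m 0 = 0 /\
  (forall x, 0 <= x -> 0 <= m x) /\
  (forall x y, 0 <= x -> x < y -> m x < m y) /\
  (forall x y t, 0 <= x -> 0 <= y -> x <> y -> 0 < t < 1 ->
      t * m x + (1 - t) * m y < m (t * x + (1 - t) * y)) /\
  (forall x, 0 < x -> derivable_pt_lim m x (m' x)) /\
  (forall eps, 0 < eps -> exists del, 0 < del /\
      forall y, 0 < y < del -> Rabs ((m y - m 0) / y - m' 0) < eps) /\
  (forall x, 0 <= x -> forall eps, 0 < eps -> exists del, 0 < del /\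
      forall y, 0 <= y -> Rabs (y - x) < del -> Rabs (m' y - m' x) < eps).

(* x < C = lim_{r->oo} m r  (m increasing, so C = sup m) *)
Definition below_cap (m : R -> R) (x : R) : Prop := exists r, 0 <= r /\ x < m r.

(* C^* > 1: every 0-n cut has total capacity > 1 *)
Definition mincut_gt1 (n : nat) (E : list edge) (mu : edge -> R -> R) : Prop :=
  forall U : nat -> bool, U 0%nat = true -> U n = false ->
    exists r, 0 <= r /\
      1 < lsum (filter (fun e => andb (U (fst e)) (negb (U (snd e)))) E) (fun e => mu e r).

Definition muinv (m : R -> R) (f : R) : R :=
  epsilon (inhabits 0) (fun r => 0 <= r /\ m r = f).

Definition delay (m m' : R -> R) (f : R) : R :=
  if Req_EM_T f 0 then / m' 0 else muinv m f / f.

Definition Rint (f : R -> R) (a b : R) : R :=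
  match excluded_middle_informative (inhabited (Riemann_integrable f a b)) with
  | left H => RiemannInt (epsilon H (fun _ => True))
  | right _ => 0
  end.

(* vectors in R^P are functions path -> R vanishing outside P *)
Definition supp (P : list path) (x : path -> R) : Prop := forall p, ~ In p P -> x p = 0.
Definition vadd (x y : path -> R) : path -> R := fun p => x p + y p.
Definition vsub (x y : path -> R) : path -> R := fun p => x p - y p.
Definition vscale (c : R) (x : path -> R) : path -> R := fun p => c * x p.
Definition comb (t : R) (x y : path -> R) : path -> R := fun p => t * x p + (1 - t) * y p.
Definition vdot (P : list path) (x y : path -> R) : R := lsum P (fun p => x p * y p).
Definition vnorm (P : list path) (x : path -> R) : R := sqrt (lsum P (fun p => x p ^ 2)).
Definition Phi (P : list path) (x : path -> R) : path -> R :=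
  fun p => x p - lsum P x / INR (length P).

Definition Aflow (P : list path) (pi : path -> R) (e : edge) : R :=
  lsum P (fun p => if in_dec edge_eq_dec e p then pi p else 0).

Definition simplex (P : list path) (x : path -> R) : Prop :=
  supp P x /\ (forall p, In p P -> 0 <= x p) /\ lsum P x = 1.

Definition PiSet (E : list edge) (P : list path) (mu : edge -> R -> R) (x : path -> R) : Prop :=
  simplex P x /\ forall e, In e E -> below_cap (mu e) (Aflow P x e).

(* topology relative to the hyperplane 1'x = 1 *)
Definition hyper (P : list path) (x : path -> R) : Prop := supp P x /\ lsum P x = 1.
Definition tangent (P : list path) (v : path -> R) : Prop := supp P v /\ lsum P v = 0.

Definition rel_int (P : list path) (K : (path -> R) -> Prop) (x : path -> R) : Prop :=
  K x /\ exists eps, 0 < eps /\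
    forall y, hyper P y -> vnorm P (vsub y x) < eps -> K y.

Definition rel_closure (P : list path) (K : (path -> R) -> Prop) (x : path -> R) : Prop :=
  hyper P x /\ forall eps, 0 < eps -> exists y, K y /\ vnorm P (vsub y x) < eps.

Definition rel_boundary (P : list path) (K : (path -> R) -> Prop) (x : path -> R) : Prop :=
  rel_closure P K x /\ ~ rel_int P K x.

Definition closed_set (P : list path) (K : (path -> R) -> Prop) : Prop :=
  forall x, supp P x ->
    (forall eps, 0 < eps -> exists y, K y /\ vnorm P (vsub y x) < eps) -> K x.

Definition convex_set (K : (path -> R) -> Prop) : Prop :=
  forall x y t, K x -> K y -> 0 <= t <= 1 -> K (comb t x y).

Definition strictly_convex_on (K : (path -> R) -> Prop) (f : (path -> R) -> R) : Prop :=
  forall x y t, K x -> K y -> x <> y -> 0 < t < 1 ->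
    f (comb t x y) < t * f x + (1 - t) * f y.

Definition has_rel_grad (P : list path) (K : (path -> R) -> Prop)
    (f : (path -> R) -> R) (x G : path -> R) : Prop :=
  forall eps, 0 < eps -> exists del, 0 < del /\
    forall v, tangent P v -> vnorm P v < del -> K (vadd x v) ->
      Rabs (f (vadd x v) - f x - vdot P G v) <= eps * vnorm P v.

Definition has_rel_deriv_map (P : list path) (K : (path -> R) -> Prop)
    (F : (path -> R) -> path -> R) (x : path -> R) (L : (path -> R) -> path -> R) : Prop :=
  (forall v w, tangent P v -> tangent P w -> forall p, In p P ->
      L (vadd v w) p = L v p + L w p) /\
  (forall c v, tangent P v -> forall p, In p P -> L (vscale c v) p = c * L v p) /\
  (forall eps, 0 < eps -> exists del, 0 < del /\
    forall v, tangent P v -> vnorm P v < del -> K (vadd x v) ->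
      vnorm P (vsub (vsub (F (vadd x v)) (F x)) (L v)) <= eps * vnorm P v).

(* admissible perturbation h : Pih -> R, with gradient field g (so that
   tilde-nabla h = Phi P o g on the relative interior) *)
Definition admissible (E : list edge) (P : list path) (mu : edge -> R -> R)
    (Pih : (path -> R) -> Prop) (h : (path -> R) -> R) (g : (path -> R) -> path -> R) : Prop :=
  (forall x, Pih x -> PiSet E P mu x) /\
  closed_set P Pih /\ convex_set Pih /\ (exists x, rel_int P Pih x) /\
  strictly_convex_on Pih h /\
  (forall x, rel_int P Pih x -> has_rel_grad P Pih h x (g x)) /\
  (forall x, rel_int P Pih x -> exists L, has_rel_deriv_map P Pih (fun y => Phi P (g y)) x L) /\
  (forall x0, rel_boundary P Pih x0 -> forall M, exists del, 0 < del /\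
      forall x, rel_int P Pih x -> vnorm P (vsub x x0) < del -> M < vnorm P (Phi P (g x))).

Definition argmin (K : (path -> R) -> Prop) (phi : (path -> R) -> R) : path -> R :=
  epsilon (inhabits (fun _ : path => 0))
    (fun w => K w /\ forall w', K w' -> phi w <= phi w').

Definition is_min (K : (path -> R) -> Prop) (phi : (path -> R) -> R) (w : path -> R) : Prop :=
  K w /\ forall w', K w' -> phi w <= phi w'.

Definition Fh (E : list edge) (P : list path) (mu mu' : edge -> R -> R)
    (Pih : (path -> R) -> Prop) (h : (path -> R) -> R) (f : edge -> R) : path -> R :=
  argmin Pih (fun w => lsum E (fun e => Aflow P w e * delay (mu e) (mu' e) (f e)) + h w).

Definition psi (E : list edge) (P : list path) (mu mu' : edge -> R -> R)
    (h : (path -> R) -> R) (pi : path -> R) : R :=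
  lsum E (fun e => Rint (delay (mu e) (mu' e)) 0 (Aflow P pi e)) + h pi.

Definition Upsilon (E : list edge) (P : list path) (mu mu' : edge -> R -> R)
    (Pih : (path -> R) -> Prop) (h : (path -> R) -> R) (g : (path -> R) -> path -> R)
    (pi : path -> R) : R :=
  let w := Fh E P mu mu' Pih h (Aflow P pi) in
  vdot P (vsub (Phi P (g w)) (Phi P (g pi))) (vsub w pi).

(* psi^h = Psi + h, where Psi(pi) = sum_e int_0^{(A pi)_e} T_e is the Beckmann
   potential.  Since each delay T_e is nondecreasing and continuous on the
   feasible flows, Psi is convex with gradient A'T(A pi); as h is strictly
   convex, so is psi^h.  Likewise the best-response objective
   w |-> w'A'T(f) + h(w) is strictly convex with the linear part having
   constant gradient A'T(f).

   Both objectives have the form f + h with f convex with locally bounded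
   gradient and h a barrier (its projected gradient blows up at the relative
   boundary of Pi_h).  Such a function attains its minimum at an interior
   point: near-minimizers cluster by compactness of the simplex, and near a
   boundary accumulation point the barrier makes f + h increase steeply.
   For a convex function, being the minimizer at an interior point depends
   only on the gradient there; at pi, psi^h and the best-response objective
   for the flows A pi share the gradient A'T(A pi) + nabla h(pi), so
   F^h(A pi) = pi iff pi minimizes psi^h.  Finally Upsilon(pi) is the
   monotonicity pairing of nabla h between pi and F^h(A pi) (the projection
   Phi is invisible on tangent vectors), positive unless the two coincide. *)

From Pilot Require Import Defs.
From Stdlib Require Import Reals List.
From Stdlib Require Import Lra Lia ClassicalEpsilon FunctionalExtensionality Classical.
Import ListNotations.
Open Scope R_scope.

Section FiniteSums.
Context {A : Type}.

Lemma lsum_cons (a : A) (l : list A) (f : A -> R) : lsum (a :: l) f = f a + lsum l f.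
Proof. reflexivity. Qed.

Lemma lsum_ext (l : list A) (f g : A -> R) :
  (forall a, In a l -> f a = g a) -> lsum l f = lsum l g.
Proof. induction l; simpl; intros H; auto. rewrite H, IHl by auto; reflexivity. Qed.

Lemma lsum_plus (l : list A) (f g : A -> R) :
  lsum l (fun a => f a + g a) = lsum l f + lsum l g.
Proof. induction l; simpl; [lra|]. rewrite IHl; ring. Qed.

Lemma lsum_minus (l : list A) (f g : A -> R) :
  lsum l (fun a => f a - g a) = lsum l f - lsum l g.
Proof. induction l; simpl; [lra|]. rewrite IHl; ring. Qed.

Lemma lsum_scal (l : list A) (c : R) (f : A -> R) :
  lsum l (fun a => c * f a) = c * lsum l f.
Proof. induction l; simpl; [lra|]. rewrite IHl; ring. Qed.

Lemma lsum_scalr (l : list A) (c : R) (f : A -> R) :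
  lsum l (fun a => f a * c) = lsum l f * c.
Proof. induction l; simpl; [lra|]. rewrite IHl; ring. Qed.

Lemma lsum_zero (l : list A) : lsum l (fun _ => 0) = 0.
Proof. induction l; simpl; lra. Qed.

Lemma lsum_const (l : list A) (c : R) : lsum l (fun _ => c) = INR (length l) * c.
Proof.
  induction l; [simpl; lra|].
  rewrite lsum_cons, IHl. change (length (a :: l)) with (S (length l)). rewrite S_INR; ring.
Qed.

Lemma lsum_le (l : list A) (f g : A -> R) :
  (forall a, In a l -> f a <= g a) -> lsum l f <= lsum l g.
Proof.
  induction l; simpl; intros H; [lra|].
  pose proof (H a (or_introl eq_refl)). assert (lsum l f <= lsum l g) by auto. lra.
Qed.

Lemma lsum_nonneg (l : list A) (f : A -> R) :
  (forall a, In a l -> 0 <= f a) -> 0 <= lsum l f.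
Proof. intros H. rewrite <- (lsum_zero l). apply lsum_le; auto. Qed.

Lemma lsum_term (l : list A) (f : A -> R) (a : A) :
  (forall b, In b l -> 0 <= f b) -> In a l -> f a <= lsum l f.
Proof.
  induction l; simpl; intros H Ha; [contradiction|].
  assert (0 <= f a0) by auto.
  assert (0 <= lsum l f) by (apply lsum_nonneg; auto).
  destruct Ha as [->|Ha]; [lra|]. assert (f a <= lsum l f) by auto. lra.
Qed.

Lemma lsum_abs (l : list A) (f : A -> R) : Rabs (lsum l f) <= lsum l (fun a => Rabs (f a)).
Proof.
  induction l; simpl; [rewrite Rabs_R0; lra|].
  eapply Rle_trans; [apply Rabs_triang|]. lra.
Qed.

Lemma eventually_all (l : list A) (Q : A -> nat -> Prop) :
  (forall a, In a l -> exists N, forall k, (N <= k)%nat -> Q a k) ->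
  exists N, forall a, In a l -> forall k, (N <= k)%nat -> Q a k.
Proof.
  induction l as [|b l IH]; intros H; [exists O; intros a []|].
  destruct IH as [N1 HN1]; [intros a Ha; apply H; simpl; auto|].
  destruct (H b (or_introl eq_refl)) as [N2 HN2].
  exists (max N1 N2). intros a [<-|Ha] k Hk; [apply HN2| apply HN1]; auto; lia.
Qed.

Lemma common_radius (l : list A) (Q : A -> R -> Prop) :
  (forall a d d', 0 < d' <= d -> Q a d -> Q a d') ->
  (forall a, In a l -> exists d, 0 < d /\ Q a d) ->
  exists d, 0 < d /\ forall a, In a l -> Q a d.
Proof.
  intros Hm. induction l as [|b l IH]; intros H; [exists 1; split; [lra| intros a []]|].
  destruct IH as [d1 [Hd1 HN1]]; [intros a Ha; apply H; simpl; auto|].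
  destruct (H b (or_introl eq_refl)) as [d2 [Hd2 HN2]].
  assert (0 < Rmin d1 d2) by (apply Rmin_glb_lt; auto).
  exists (Rmin d1 d2). split; auto.
  intros a [<-|Ha]; [apply (Hm _ d2)| apply (Hm _ d1)]; auto;
    split; auto; [apply Rmin_r| apply Rmin_l].
Qed.

End FiniteSums.

Lemma lsum_swap {A B : Type} (l1 : list A) (l2 : list B) (F : A -> B -> R) :
  lsum l1 (fun a => lsum l2 (fun b => F a b)) = lsum l2 (fun b => lsum l1 (fun a => F a b)).
Proof.
  induction l1; simpl; [rewrite lsum_zero; auto|].
  rewrite IHl1, <- lsum_plus. reflexivity.
Qed.

Lemma Rabs_le_inv (a b : R) : Rabs a <= b -> - b <= a <= b.
Proof. unfold Rabs; destruct (Rcase_abs a); lra. Qed.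

Lemma Rabs_lt_inv (a b : R) : Rabs a < b -> - b < a < b.
Proof. unfold Rabs; destruct (Rcase_abs a); lra. Qed.

Lemma small_step (t c d : R) :
  0 <= c -> 0 < d -> 0 <= t <= d / (2 * (c + 1)) -> t * c < d.
Proof.
  intros Hc Hd Ht. apply Rle_lt_trans with (d / (2 * (c + 1)) * c).
  - apply Rmult_le_compat_r; lra.
  - replace (d / (2 * (c + 1)) * c) with (d * (c / (2 * (c + 1)))) by (field; lra).
    rewrite <- (Rmult_1_r d) at 2. apply Rmult_lt_compat_l; [lra|].
    apply (Rmult_lt_reg_r (2 * (c + 1))); [lra|]. field_simplify; lra.
Qed.

Lemma mul_div_succ_lt (n a : R) : 0 <= n -> 0 < a -> n * (a / (n + 1)) < a.
Proof.
  intros Hn Ha. replace (n * (a / (n + 1))) with (a * (n / (n + 1))) by (field; lra).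
  rewrite <- (Rmult_1_r a) at 2. apply Rmult_lt_compat_l; [lra|].
  apply (Rmult_lt_reg_r (n + 1)); [lra|]. field_simplify; lra.
Qed.

Lemma ge_of_forall_eps (a b c : R) :
  0 <= c -> (forall eps, 0 < eps -> a >= b - eps * c) -> a >= b.
Proof.
  intros Hc H. destruct (Rge_dec a b) as [|Hn]; auto. exfalso.
  assert (Hp : 0 < (b - a) / (2 * (c + 1))) by (apply Rdiv_lt_0_compat; lra).
  specialize (H _ Hp).
  assert ((b - a) / (2 * (c + 1)) * c < b - a) by (apply small_step; lra).
  lra.
Qed.

(** * Euclidean geometry of R^P and of the hyperplane 1'x = 1 *)

Lemma vnorm_ge0 (P : list path) (v : path -> R) : 0 <= vnorm P v.
Proof. apply sqrt_pos. Qed.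

Lemma sumsq_ge0 (P : list path) (v : path -> R) : 0 <= lsum P (fun p => v p ^ 2).
Proof. apply lsum_nonneg; intros; apply pow2_ge_0. Qed.

Lemma vnorm_sq (P : list path) (v : path -> R) : vnorm P v * vnorm P v = lsum P (fun p => v p ^ 2).
Proof. apply sqrt_sqrt, sumsq_ge0. Qed.

Lemma vnorm_ext (P : list path) (v w : path -> R) :
  (forall p, In p P -> v p = w p) -> vnorm P v = vnorm P w.
Proof. intros H; unfold vnorm; f_equal; apply lsum_ext; intros; rewrite H; auto. Qed.

Lemma vnorm_coord (P : list path) (v : path -> R) (p : path) :
  In p P -> Rabs (v p) <= vnorm P v.
Proof.
  intros Hp. unfold vnorm. rewrite <- sqrt_Rsqr_abs. apply sqrt_le_1_alt.
  unfold Rsqr. replace (v p * v p) with (v p ^ 2) by ring.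
  apply (lsum_term P (fun p => v p ^ 2)); auto. intros; apply pow2_ge_0.
Qed.

Lemma vnorm_le_l1 (P : list path) (v : path -> R) : vnorm P v <= lsum P (fun p => Rabs (v p)).
Proof.
  unfold vnorm. rewrite <- (sqrt_Rsqr (lsum P (fun p => Rabs (v p))))
    by (apply lsum_nonneg; intros; apply Rabs_pos).
  apply sqrt_le_1_alt. unfold Rsqr. induction P as [|a P IH]; [simpl; lra|]. rewrite !lsum_cons.
  assert (0 <= lsum P (fun p => Rabs (v p))) by (apply lsum_nonneg; intros; apply Rabs_pos).
  assert (v a ^ 2 = Rabs (v a) * Rabs (v a))
    by (rewrite <- Rabs_mult, Rabs_pos_eq; [ring| apply Rle_0_sqr]).
  pose proof (Rabs_pos (v a)). nra.
Qed.

Lemma vnorm_scale (P : list path) (c : R) (v : path -> R) :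
  vnorm P (vscale c v) = Rabs c * vnorm P v.
Proof.
  unfold vnorm, vscale. rewrite (lsum_ext P _ (fun p => c ^ 2 * v p ^ 2)) by (intros; ring).
  rewrite lsum_scal, sqrt_mult by (apply pow2_ge_0 || apply sumsq_ge0).
  f_equal. rewrite <- sqrt_Rsqr_abs. unfold Rsqr. f_equal; ring.
Qed.

Lemma vdot_abs_le (P : list path) (a v : path -> R) :
  Rabs (vdot P a v) <= lsum P (fun p => Rabs (a p)) * vnorm P v.
Proof.
  unfold vdot. eapply Rle_trans; [apply lsum_abs|]. rewrite <- lsum_scalr.
  apply lsum_le; intros p Hp. rewrite Rabs_mult.
  apply Rmult_le_compat_l; [apply Rabs_pos| apply vnorm_coord; auto].
Qed.

Lemma vdot_abs_le1 (P : list path) (a v : path -> R) :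
  (forall p, In p P -> Rabs (v p) <= 1) -> Rabs (vdot P a v) <= lsum P (fun p => Rabs (a p)).
Proof.
  intros H. unfold vdot. eapply Rle_trans; [apply lsum_abs|].
  apply lsum_le; intros p Hp. rewrite Rabs_mult. specialize (H p Hp).
  pose proof (Rabs_pos (a p)). nra.
Qed.

Lemma vdot_scale (P : list path) (a : path -> R) (c : R) (v : path -> R) :
  vdot P a (vscale c v) = c * vdot P a v.
Proof. unfold vdot, vscale. rewrite <- lsum_scal. apply lsum_ext; intros; ring. Qed.

Lemma vdot_vadd_l (P : list path) (a b v : path -> R) :
  vdot P (vadd a b) v = vdot P a v + vdot P b v.
Proof. unfold vdot, vadd. rewrite <- lsum_plus. apply lsum_ext; intros; ring. Qed.

Lemma vdot_vsub_l (P : list path) (a b v : path -> R) :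
  vdot P (vsub a b) v = vdot P a v - vdot P b v.
Proof. unfold vdot, vsub. rewrite <- lsum_minus. apply lsum_ext; intros; ring. Qed.

Lemma comb_vadd (t : R) (w x : path -> R) : comb t w x = vadd x (vscale t (vsub w x)).
Proof. apply functional_extensionality; intros p; unfold comb, vadd, vscale, vsub; ring. Qed.

Lemma vsub_comb (t : R) (z x : path -> R) : vsub (comb t z x) x = vscale t (vsub z x).
Proof. apply functional_extensionality; intros p; unfold vsub, comb, vscale; ring. Qed.

Lemma simplex_hyper (P : list path) (x : path -> R) : simplex P x -> hyper P x.
Proof. intros [H1 [H2 H3]]; split; auto. Qed.

Lemma simplex_coord (P : list path) (x : path -> R) (p : path) :
  simplex P x -> In p P -> 0 <= x p <= 1.
Proof. intros [H1 [H2 H3]] Hp. split; auto. rewrite <- H3. apply lsum_term; auto. Qed.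

Lemma simplex_nonempty (P : list path) (x : path -> R) : simplex P x -> P <> [].
Proof. intros [_ [_ H]] ->. unfold lsum in H; simpl in H. lra. Qed.

Lemma simplex_coord_diff (P : list path) (x y : path -> R) :
  simplex P x -> simplex P y -> forall p, In p P -> Rabs (vsub x y p) <= 1.
Proof.
  intros Hx Hy p Hp. pose proof (simplex_coord P x p Hx Hp).
  pose proof (simplex_coord P y p Hy Hp). unfold vsub. apply Rabs_le. lra.
Qed.

Lemma vdot_small (P : list path) (a v : path -> R) (eps : R) :
  0 < eps -> vnorm P v < eps / (lsum P (fun p => Rabs (a p)) + 1) -> Rabs (vdot P a v) < eps.
Proof.
  intros He Hv. set (C := lsum P (fun p => Rabs (a p))) in *.
  assert (HC : 0 <= C) by (apply lsum_nonneg; intros; apply Rabs_pos).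
  eapply Rle_lt_trans; [apply vdot_abs_le|]. fold C.
  apply Rle_lt_trans with (C * (eps / (C + 1))).
  - apply Rmult_le_compat_l; [lra| apply Rlt_le, Hv].
  - apply mul_div_succ_lt; lra.
Qed.

Lemma vdot_simplex_bound (P : list path) (a x y : path -> R) (B : R) :
  (forall p, In p P -> Rabs (a p) <= B) -> simplex P x -> simplex P y ->
  Rabs (vdot P a (vsub x y)) <= Rabs B * INR (length P).
Proof.
  intros Ha Hx Hy. eapply Rle_trans; [apply vdot_abs_le1, simplex_coord_diff; auto|].
  rewrite Rmult_comm, <- lsum_const. apply lsum_le; intros p Hp.
  eapply Rle_trans; [apply Ha; auto| apply Rle_abs].
Qed.

Lemma vdot_vsub_comb (P : list path) (G w z x : path -> R) (t : R) :
  vdot P G (vsub w (comb t z x)) = vdot P G (vsub w x) - t * vdot P G (vsub z x).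
Proof. unfold vdot, vsub, comb. rewrite <- lsum_scal, <- lsum_minus. apply lsum_ext; intros; ring. Qed.

Lemma tangent_sub (P : list path) (w x : path -> R) : hyper P w -> hyper P x -> tangent P (vsub w x).
Proof.
  intros [Hw1 Hw2] [Hx1 Hx2]; split; unfold vsub.
  - intros p Hp; rewrite Hw1, Hx1; auto; ring.
  - rewrite lsum_minus; lra.
Qed.

Lemma tangent_scale (P : list path) (c : R) (v : path -> R) : tangent P v -> tangent P (vscale c v).
Proof.
  intros [H1 H2]; split; unfold vscale.
  - intros p Hp; rewrite H1; auto; ring.
  - rewrite lsum_scal, H2; ring.
Qed.

Lemma hyper_comb (P : list path) (t : R) (x y : path -> R) :
  hyper P x -> hyper P y -> hyper P (comb t x y).
Proof.
  intros [Hx1 Hx2] [Hy1 Hy2]; split; unfold comb.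
  - intros p Hp; rewrite Hx1, Hy1; auto; ring.
  - rewrite lsum_plus, !lsum_scal, Hx2, Hy2; ring.
Qed.

Lemma hyper_vadd (P : list path) (x v : path -> R) : hyper P x -> tangent P v -> hyper P (vadd x v).
Proof.
  intros [Hx1 Hx2] [Hv1 Hv2]; split; unfold vadd.
  - intros p Hp; rewrite Hx1, Hv1; auto; ring.
  - rewrite lsum_plus, Hx2, Hv2; ring.
Qed.

Lemma vdot_Phi (P : list path) (a v : path -> R) : tangent P v -> vdot P (Phi P a) v = vdot P a v.
Proof.
  intros [H1 H2]. unfold vdot, Phi.
  rewrite (lsum_ext P _ (fun p => a p * v p - (lsum P a / INR (length P)) * v p)) by (intros; ring).
  rewrite lsum_minus, lsum_scal, H2; ring.
Qed.

Lemma lsum_Phi (P : list path) (a : path -> R) : P <> [] -> lsum P (Phi P a) = 0.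
Proof.
  intros HP. unfold Phi. rewrite lsum_minus, lsum_const.
  assert (INR (length P) <> 0) by (destruct P; [congruence|]; simpl length; rewrite S_INR;
                                   pose proof (pos_INR (length P)); lra).
  field; auto.
Qed.

Lemma steepest_tangent_direction (P : list path) (a : path -> R) :
  P <> [] -> 0 < vnorm P (Phi P a) ->
  exists u, tangent P u /\ vnorm P u = 1 /\ vdot P a u = vnorm P (Phi P a).
Proof.
  intros HP HN. set (N := vnorm P (Phi P a)) in *.
  set (u := fun p => if in_dec (list_eq_dec edge_eq_dec) p P then / N * Phi P a p else 0).
  assert (Hu : forall p, In p P -> u p = / N * Phi P a p)
    by (intros p Hp; unfold u; destruct in_dec; [reflexivity| contradiction]).
  assert (Ht : tangent P u).
  { split.
    - intros p Hp; unfold u; destruct in_dec; [contradiction| reflexivity].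
    - rewrite (lsum_ext P u (fun p => / N * Phi P a p)), lsum_scal, lsum_Phi by auto; ring. }
  exists u; split; [exact Ht| split].
  - rewrite (vnorm_ext P u (vscale (/ N) (Phi P a))) by (intros; rewrite Hu; auto).
    rewrite vnorm_scale, Rabs_pos_eq by (apply Rlt_le, Rinv_0_lt_compat; lra).
    fold N; field; lra.
  - rewrite <- (vdot_Phi P a u Ht). unfold vdot.
    rewrite (lsum_ext P _ (fun p => / N * (Phi P a p ^ 2))) by (intros; rewrite Hu; auto; ring).
    rewrite lsum_scal, <- vnorm_sq. fold N; field; lra.
Qed.

(** * First-order convex analysis on a convex subset of the hyperplane *)

Definition convex_on (K : (path -> R) -> Prop) (f : (path -> R) -> R) : Prop :=
  forall x y t, K x -> K y -> 0 <= t <= 1 -> f (comb t x y) <= t * f x + (1 - t) * f y.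

Lemma strictly_convex_convex (K : (path -> R) -> Prop) (f : (path -> R) -> R) :
  strictly_convex_on K f -> convex_on K f.
Proof.
  intros H x y t Hx Hy Ht.
  destruct (classic (x = y)) as [<-|Hne].
  { replace (comb t x x) with x by (apply functional_extensionality; intros p; unfold comb; ring).
    lra. }
  destruct (Req_dec t 0) as [->|H0].
  { replace (comb 0 x y) with y by (apply functional_extensionality; intros p; unfold comb; ring).
    lra. }
  destruct (Req_dec t 1) as [->|H1].
  { replace (comb 1 x y) with x by (apply functional_extensionality; intros p; unfold comb; ring).
    lra. }
  apply Rlt_le, H; auto; lra.
Qed.

Lemma convex_on_plus (K : (path -> R) -> Prop) (f h : (path -> R) -> R) :
  convex_on K f -> convex_on K h -> convex_on K (fun w => f w + h w).
Proof. intros Hf Hh x y t Hx Hy Ht. specialize (Hf x y t Hx Hy Ht). specialize (Hh x y t Hx Hy Ht). lra. Qed.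

Lemma strictly_convex_plus (K : (path -> R) -> Prop) (f h : (path -> R) -> R) :
  convex_on K f -> strictly_convex_on K h -> strictly_convex_on K (fun w => f w + h w).
Proof.
  intros Hf Hh x y t Hx Hy Hne Ht. specialize (Hh x y t Hx Hy Hne Ht).
  specialize (Hf x y t Hx Hy ltac:(lra)). lra.
Qed.

Lemma linear_convex (P : list path) (c : path -> R) (K : (path -> R) -> Prop) :
  convex_on K (fun w => vdot P c w).
Proof.
  intros x y t _ _ _. apply Req_le. unfold vdot, comb.
  rewrite <- !lsum_scal, <- lsum_plus. apply lsum_ext; intros; ring.
Qed.

Lemma linear_grad (P : list path) (c : path -> R) (K : (path -> R) -> Prop) (x : path -> R) :
  has_rel_grad P K (fun w => vdot P c w) x c.
Proof.
  intros eps He. exists 1. split; [lra|]. intros v _ _ _.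
  replace (vdot P c (vadd x v) - vdot P c x - vdot P c v) with 0.
  - rewrite Rabs_R0. apply Rmult_le_pos; [lra| apply vnorm_ge0].
  - unfold vdot, vadd. rewrite <- !lsum_minus, <- (lsum_zero P). apply lsum_ext; intros; ring.
Qed.

Lemma has_rel_grad_plus (P : list path) (K : (path -> R) -> Prop) (f h : (path -> R) -> R)
    (x G1 G2 : path -> R) :
  has_rel_grad P K f x G1 -> has_rel_grad P K h x G2 ->
  has_rel_grad P K (fun w => f w + h w) x (vadd G1 G2).
Proof.
  intros H1 H2 eps He.
  destruct (H1 (eps / 2) ltac:(lra)) as [d1 [Hd1 H1']].
  destruct (H2 (eps / 2) ltac:(lra)) as [d2 [Hd2 H2']].
  exists (Rmin d1 d2). split; [apply Rmin_glb_lt; auto|]. intros v Hv Hn Kv.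
  specialize (H1' v Hv (Rlt_le_trans _ _ _ Hn (Rmin_l _ _)) Kv).
  specialize (H2' v Hv (Rlt_le_trans _ _ _ Hn (Rmin_r _ _)) Kv).
  rewrite vdot_vadd_l.
  replace (f (vadd x v) + h (vadd x v) - (f x + h x) - (vdot P G1 v + vdot P G2 v))
    with ((f (vadd x v) - f x - vdot P G1 v) + (h (vadd x v) - h x - vdot P G2 v)) by ring.
  eapply Rle_trans; [apply Rabs_triang| lra].
Qed.

Section Gradient.
Variables (P : list path) (K : (path -> R) -> Prop) (f : (path -> R) -> R).
Hypothesis K_convex : convex_set K.

Lemma gradient_along_segment (x G w : path -> R) (eps : R) :
  K x -> K w -> hyper P x -> hyper P w -> has_rel_grad P K f x G -> 0 < eps ->
  exists t, 0 < t <= 1 /\ K (comb t w x) /\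
    Rabs (f (comb t w x) - f x - t * vdot P G (vsub w x)) <= eps * t * vnorm P (vsub w x).
Proof.
  intros Kx Kw Hx Hw HG He.
  destruct (HG eps He) as [del [Hd Hdel]].
  set (N := vnorm P (vsub w x)). assert (HN : 0 <= N) by apply vnorm_ge0.
  set (t := Rmin (1 / 2) (del / (2 * (N + 1)))).
  assert (Ht : 0 < t) by (apply Rmin_glb_lt; [lra| apply Rdiv_lt_0_compat; lra]).
  assert (Ht1 : t <= 1 / 2) by apply Rmin_l.
  assert (Ht2 : t <= del / (2 * (N + 1))) by apply Rmin_r.
  assert (Kc : K (comb t w x)) by (apply K_convex; auto; lra).
  exists t. split; [lra| split; [exact Kc|]].
  rewrite comb_vadd in *.
  assert (Hvn : vnorm P (vscale t (vsub w x)) = t * N)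
    by (rewrite vnorm_scale, Rabs_pos_eq; [reflexivity| lra]).
  assert (Hlt : vnorm P (vscale t (vsub w x)) < del) by (rewrite Hvn; apply small_step; lra).
  specialize (Hdel _ (tangent_scale P t _ (tangent_sub P w x Hw Hx)) Hlt Kc).
  rewrite vdot_scale, Hvn in Hdel. fold N. replace (eps * t * N) with (eps * (t * N)) by ring.
  exact Hdel.
Qed.

Lemma gradient_inequality (x G w : path -> R) :
  convex_on K f -> K x -> K w -> hyper P x -> hyper P w -> has_rel_grad P K f x G ->
  f w >= f x + vdot P G (vsub w x).
Proof.
  intros Hf Kx Kw Hx Hw HG.
  enough (f w - f x >= vdot P G (vsub w x)) by lra.
  apply (ge_of_forall_eps _ _ (vnorm P (vsub w x))); [apply vnorm_ge0|]. intros eps He.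
  destruct (gradient_along_segment x G w eps Kx Kw Hx Hw HG He) as [t [Ht [_ Hest]]].
  pose proof (Hf w x t Kw Kx ltac:(lra)). apply Rabs_le_inv in Hest.
  apply Rle_ge, (Rmult_le_reg_l t); [lra| nra].
Qed.

Lemma first_order_condition (x G w : path -> R) :
  K x -> K w -> hyper P x -> hyper P w -> has_rel_grad P K f x G ->
  (forall w', K w' -> f x <= f w') -> vdot P G (vsub w x) >= 0.
Proof.
  intros Kx Kw Hx Hw HG Hmin.
  apply (ge_of_forall_eps _ _ (vnorm P (vsub w x))); [apply vnorm_ge0|]. intros eps He.
  destruct (gradient_along_segment x G w eps Kx Kw Hx Hw HG He) as [t [Ht [Kc Hest]]].
  pose proof (Hmin _ Kc). apply Rabs_le_inv in Hest.
  apply Rle_ge, (Rmult_le_reg_l t); [lra| nra].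
Qed.

Lemma is_min_iff_gradient (x G : path -> R) :
  convex_on K f -> (forall w, K w -> hyper P w) -> K x -> has_rel_grad P K f x G ->
  is_min K f x <-> forall w, K w -> vdot P G (vsub w x) >= 0.
Proof.
  intros Hf Hh Kx HG. split.
  - intros [_ Hmin] w Kw. apply (first_order_condition x G w); auto.
  - intros Hdir. split; [exact Kx|]. intros w Kw.
    pose proof (gradient_inequality x G w Hf Kx Kw (Hh x Kx) (Hh w Kw) HG).
    specialize (Hdir w Kw). lra.
Qed.

Lemma gradient_strictly_monotone (x y gx gy : path -> R) :
  strictly_convex_on K f -> K x -> K y -> hyper P x -> hyper P y -> x <> y ->
  has_rel_grad P K f x gx -> has_rel_grad P K f y gy ->
  vdot P (vsub gy gx) (vsub y x) > 0.
Proof.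
  intros Hs Kx Ky Hx Hy Hne Hgx Hgy.
  set (z := comb (1 / 2) x y).
  assert (Kz : K z) by (apply K_convex; auto; lra).
  assert (Hz : hyper P z) by (apply hyper_comb; auto).
  pose proof (Hs x y (1 / 2) Kx Ky Hne ltac:(lra)) as Hmid. fold z in Hmid.
  pose proof (strictly_convex_convex K f Hs) as Hc.
  pose proof (gradient_inequality x gx z Hc Kx Kz Hx Hz Hgx) as G1.
  pose proof (gradient_inequality y gy z Hc Ky Kz Hy Hz Hgy) as G2.
  assert (E1 : vdot P gx (vsub z x) = 1 / 2 * vdot P gx (vsub y x))
    by (unfold vdot, vsub, z, comb; rewrite <- lsum_scal; apply lsum_ext; intros; field).
  assert (E2 : vdot P gy (vsub z y) = - (1 / 2) * vdot P gy (vsub y x))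
    by (unfold vdot, vsub, z, comb; rewrite <- lsum_scal; apply lsum_ext; intros; field).
  rewrite vdot_vsub_l. lra.
Qed.

Lemma is_min_unique (a b : path -> R) :
  strictly_convex_on K f -> is_min K f a -> is_min K f b -> a = b.
Proof.
  intros Hs [Ka Ha] [Kb Hb]. apply NNPP; intros Hne.
  pose proof (Hs a b (1 / 2) Ka Kb Hne ltac:(lra)).
  pose proof (Ha (comb (1 / 2) a b) (K_convex a b (1 / 2) Ka Kb ltac:(lra))).
  pose proof (Ha b Kb). pose proof (Hb a Ka). lra.
Qed.

Lemma argmin_eq (a : path -> R) : strictly_convex_on K f -> is_min K f a -> argmin K f = a.
Proof.
  intros Hs Ha. apply (is_min_unique _ _ Hs); auto. unfold argmin.
  apply (epsilon_spec (inhabits (fun _ : path => 0)) (fun w => K w /\ forall w', K w' -> f w <= f w')).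
  exists a; exact Ha.
Qed.

End Gradient.

(** * Relative interior and compactness of the simplex *)

Section Interior.
Variables (P : list path) (K : (path -> R) -> Prop).
Hypothesis K_simplex : forall w, K w -> simplex P w.
Hypothesis K_convex : convex_set K.

Lemma segment_interior (z x : path -> R) (t : R) :
  rel_int P K z -> K x -> 0 < t <= 1 -> rel_int P K (comb t z x).
Proof.
  intros [Kz [e0 [He0 Hz]]] Kx Ht.
  split; [apply K_convex; auto; lra|].
  exists (t * e0). split; [nra|]. intros w Hw Hn.
  assert (Hzh : hyper P z) by (apply simplex_hyper; auto).
  assert (Hch : hyper P (comb t z x)) by (apply hyper_comb; auto; apply simplex_hyper; auto).
  (* w is the point t-way from x to z', where z' is close to z *)
  set (z' := vadd z (vscale (/ t) (vsub w (comb t z x)))).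
  assert (Kz' : K z').
  { apply Hz.
    - apply hyper_vadd; auto. apply tangent_scale, tangent_sub; auto.
    - replace (vsub z' z) with (vscale (/ t) (vsub w (comb t z x)))
        by (apply functional_extensionality; intros p; unfold z', vsub, vadd, vscale; ring).
      rewrite vnorm_scale, Rabs_pos_eq by (apply Rlt_le, Rinv_0_lt_compat; lra).
      apply (Rmult_lt_reg_l t); [lra|]. rewrite <- Rmult_assoc, Rinv_r, Rmult_1_l by lra. exact Hn. }
  replace w with (comb t z' x); [apply K_convex; auto; lra|].
  apply functional_extensionality; intros p. unfold z', comb, vadd, vscale, vsub. field. lra.
Qed.

Lemma interior_points_near (z x : path -> R) (del : R) :
  rel_int P K z -> K x -> 0 < del ->
  exists t, 0 < t <= 1 / 2 /\ rel_int P K (comb t z x) /\ vnorm P (vsub (comb t z x) x) < del.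
Proof.
  intros Hz Kx Hd. set (N := vnorm P (vsub z x)). assert (HN : 0 <= N) by apply vnorm_ge0.
  set (t := Rmin (1 / 2) (del / (2 * (N + 1)))).
  assert (Ht : 0 < t) by (apply Rmin_glb_lt; [lra| apply Rdiv_lt_0_compat; lra]).
  assert (Ht1 : t <= 1 / 2) by apply Rmin_l.
  assert (Ht2 : t <= del / (2 * (N + 1))) by apply Rmin_r.
  exists t. split; [lra| split; [apply segment_interior; auto; lra|]].
  rewrite vsub_comb, vnorm_scale, Rabs_pos_eq by lra. fold N. apply small_step; lra.
Qed.

End Interior.

Definition strictly_increasing (phi : nat -> nat) : Prop := forall k, (phi k < phi (S k))%nat.

Lemma strictly_increasing_ge (phi : nat -> nat) :
  strictly_increasing phi -> forall k, (k <= phi k)%nat.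
Proof. intros H k; induction k; [lia|]. specialize (H k). lia. Qed.

Lemma strictly_increasing_lt (phi : nat -> nat) :
  strictly_increasing phi -> forall i j, (i < j)%nat -> (phi i < phi j)%nat.
Proof.
  intros H i j Hij. induction j; [lia|].
  destruct (Nat.eq_dec i j) as [->|]; [apply H|]. specialize (H j).
  assert (phi i < phi j)%nat by (apply IHj; lia). lia.
Qed.

Lemma inv_succ_small (eps : R) : 0 < eps -> exists N, forall k, (N <= k)%nat -> / (INR k + 1) < eps.
Proof.
  intros He. destruct (INR_archimed eps 1) as [N HN]; [lra|]. exists N. intros k Hk.
  apply le_INR in Hk. pose proof (pos_INR N).
  apply (Rmult_lt_reg_l (INR k + 1)); [lra|]. rewrite Rinv_r by lra. nra.
Qed.

Lemma bolzano_weierstrass_01 (v : nat -> R) : (forall k, 0 <= v k <= 1) ->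
  exists phi l, strictly_increasing phi /\ Un_cv (fun k => v (phi k)) l.
Proof.
  intros Hv.
  destruct (Bolzano_Weierstrass v (fun c => 0 <= c <= 1) (compact_P3 0 1) Hv) as [l Hl].
  (* l is a cluster value: beyond any index there are terms 1/(k+1)-close to l *)
  assert (Hsel : forall N k : nat, exists p, (N <= p)%nat /\ Rabs (v p - l) < / (INR k + 1)).
  { intros N k. assert (Hp : 0 < / (INR k + 1))
      by (apply Rinv_0_lt_compat; pose proof (pos_INR k); lra).
    destruct (Hl (disc l (mkposreal _ Hp)) N) as [p [Hp1 Hp2]].
    - exists (mkposreal _ Hp). intros y Hy; exact Hy.
    - exists p; split; auto. }
  set (sel := fun N k => epsilon (inhabits 0%nat)
                (fun p => (N <= p)%nat /\ Rabs (v p - l) < / (INR k + 1))).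
  assert (Hsel' : forall N k, (N <= sel N k)%nat /\ Rabs (v (sel N k) - l) < / (INR k + 1))
    by (intros N k; apply epsilon_spec, Hsel).
  set (phi := fix f (k : nat) : nat :=
                match k with O => sel O O | S k' => sel (S (f k')) (S k') end).
  exists phi, l. split.
  - intros k. simpl. destruct (Hsel' (S (phi k)) (S k)). lia.
  - intros eps He. destruct (inv_succ_small eps He) as [N HN]. exists N. intros k Hk.
    unfold Rdist. apply Rlt_trans with (/ (INR k + 1)); [|apply HN; lia].
    destruct k; simpl; apply Hsel'.
Qed.

Lemma bolzano_weierstrass_coords (l : list path) (u : nat -> path -> R) :
  (forall k p, In p l -> 0 <= u k p <= 1) ->
  exists phi x, strictly_increasing phi /\ forall p, In p l -> Un_cv (fun k => u (phi k) p) (x p).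
Proof.
  induction l as [|a l IH]; intros Hu.
  - exists (fun k => k), (fun _ => 0). split; [intros k; lia| intros p []].
  - destruct IH as [phi [x [Hphi Hx]]]; [intros k p Hp; apply Hu; simpl; auto|].
    destruct (bolzano_weierstrass_01 (fun k => u (phi k) a)) as [psi [la [Hpsi Hla]]];
      [intros k; apply Hu; simpl; auto|].
    exists (fun k => phi (psi k)), (fun p => if list_eq_dec edge_eq_dec p a then la else x p).
    split; [intros k; apply strictly_increasing_lt; auto|].
    intros p Hp. destruct (list_eq_dec edge_eq_dec p a) as [->|Hne]; [exact Hla|].
    destruct Hp as [Hp|Hp]; [congruence|].
    intros eps He. destruct (Hx p Hp eps He) as [N HN]. exists N. intros k Hk.
    apply HN. pose proof (strictly_increasing_ge psi Hpsi k). lia.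
Qed.

Lemma simplex_cluster_point (P : list path) (u : nat -> path -> R) :
  (forall k, simplex P (u k)) ->
  exists phi xs, strictly_increasing phi /\ supp P xs /\
    forall eta, 0 < eta -> exists N, forall k, (N <= k)%nat -> vnorm P (vsub (u (phi k)) xs) < eta.
Proof.
  intros Hu.
  destruct (bolzano_weierstrass_coords P u) as [phi [x0 [Hphi Hx0]]];
    [intros k p Hp; apply (simplex_coord P); auto|].
  set (xs := fun p => if in_dec (list_eq_dec edge_eq_dec) p P then x0 p else 0).
  exists phi, xs. split; [exact Hphi| split].
  { intros p Hp. unfold xs. destruct in_dec; [contradiction| reflexivity]. }
  intros eta Het.
  set (e' := eta / (INR (length P) + 1)).
  assert (He' : 0 < e') by (apply Rdiv_lt_0_compat; [lra| pose proof (pos_INR (length P)); lra]).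
  destruct (eventually_all P (fun p k => Rabs (u (phi k) p - xs p) < e')) as [N HN].
  { intros p Hp. destruct (Hx0 p Hp e' He') as [N HN]. exists N. intros k Hk.
    unfold xs. destruct in_dec; [apply HN; auto| contradiction]. }
  exists N; intros k Hk. eapply Rle_lt_trans; [apply vnorm_le_l1|].
  apply Rle_lt_trans with (lsum P (fun _ => e')).
  - apply lsum_le; intros p Hp; apply Rlt_le; unfold vsub; apply HN; auto.
  - rewrite lsum_const. apply mul_div_succ_lt; [apply pos_INR| lra].
Qed.

(** * Interior minimizers of convex functions plus a barrier *)

Lemma convex_lower_bound (P : list path) (K : (path -> R) -> Prop) (f : (path -> R) -> R)
    (z G w : path -> R) :
  (forall x, K x -> simplex P x) -> convex_set K -> convex_on K f -> K z -> K w ->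
  has_rel_grad P K f z G -> f z - lsum P (fun p => Rabs (G p)) <= f w.
Proof.
  intros Hs Hc Hf Kz Kw HG.
  pose proof (gradient_inequality P K f Hc z G w Hf Kz Kw
                (simplex_hyper _ _ (Hs z Kz)) (simplex_hyper _ _ (Hs w Kw)) HG).
  pose proof (vdot_abs_le1 P G (vsub w z) (simplex_coord_diff P w z (Hs w Kw) (Hs z Kz))) as Hb.
  apply Rabs_le_inv in Hb. lra.
Qed.

Lemma not_interior_boundary (P : list path) (K : (path -> R) -> Prop) (x : path -> R) :
  hyper P x -> K x -> ~ rel_int P K x -> rel_boundary P K x.
Proof.
  intros Hx Kx Hnint. split; [split; [exact Hx|]| exact Hnint]. intros eps He.
  exists x. split; [exact Kx|]. unfold vnorm.
  rewrite (lsum_ext P _ (fun _ => 0)), lsum_zero, sqrt_0 by (intros; unfold vsub; ring).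
  exact He.
Qed.

Section Existence.
Variables (P : list path) (K : (path -> R) -> Prop) (f h : (path -> R) -> R)
          (Gf g : (path -> R) -> path -> R).
Hypothesis K_simplex : forall x, K x -> simplex P x.
Hypothesis K_closed : Defs.closed_set P K.
Hypothesis K_convex : convex_set K.
Hypothesis f_convex : convex_on K f.
Hypothesis h_convex : convex_on K h.
Hypothesis f_grad : forall x, rel_int P K x -> has_rel_grad P K f x (Gf x).
Hypothesis h_grad : forall x, rel_int P K x -> has_rel_grad P K h x (g x).

Let F (w : path -> R) : R := f w + h w.

Lemma F_convex : convex_on K F.
Proof. apply convex_on_plus; auto. Qed.

Lemma F_grad (x : path -> R) : rel_int P K x -> has_rel_grad P K F x (vadd (Gf x) (g x)).
Proof. intros Hx. apply has_rel_grad_plus; auto. Qed.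

Lemma F_gradient_inequality (x w : path -> R) :
  rel_int P K x -> K w -> F w >= F x + vdot P (vadd (Gf x) (g x)) (vsub w x).
Proof.
  intros Hx Kw. assert (Kx : K x) by apply Hx.
  apply (gradient_inequality P K F K_convex); auto using F_convex, F_grad; apply simplex_hyper; auto.
Qed.

Lemma near_minimizers_cluster (z : path -> R) : rel_int P K z ->
  exists m xs, K xs /\ (forall w, K w -> m <= F w) /\
    forall eps eta, 0 < eps -> 0 < eta -> exists w, K w /\ F w < m + eps /\ vnorm P (vsub w xs) < eta.
Proof.
  intros Hz. assert (Kz : K z) by apply Hz.
  assert (Hlow : forall w, K w -> F z - lsum P (fun p => Rabs (vadd (Gf z) (g z) p)) <= F w)
    by (intros w Kw; apply (convex_lower_bound P K F z); auto using F_convex, F_grad).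
  destruct (completeness (fun r => exists w, K w /\ r = - F w)) as [s [Hub Hlub]].
  { exists (- (F z - lsum P (fun p => Rabs (vadd (Gf z) (g z) p)))).
    intros r [w [Kw ->]]. specialize (Hlow w Kw). lra. }
  { exists (- F z), z; auto. }
  assert (Hm1 : forall w, K w -> - s <= F w)
    by (intros w Kw; assert (- F w <= s) by (apply Hub; exists w; auto); lra).
  assert (Hm2 : forall eps, 0 < eps -> exists w, K w /\ F w < - s + eps).
  { intros eps He. apply NNPP; intros Hn.
    assert (s <= s - eps); [|lra].
    apply Hlub. intros r [w [Kw ->]]. destruct (Rlt_dec (F w) (- s + eps)) as [Hl|Hl]; [|lra].
    exfalso; apply Hn; exists w; auto. }
  set (u := fun k : nat => epsilon (inhabits (fun _ : path => 0))
                             (fun w => K w /\ F w < - s + / (INR k + 1))).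
  assert (Hu : forall k, K (u k) /\ F (u k) < - s + / (INR k + 1)).
  { intros k. apply epsilon_spec, Hm2, Rinv_0_lt_compat. pose proof (pos_INR k); lra. }
  destruct (simplex_cluster_point P u) as [phi [xs [Hphi [Hsupp Hcv]]]];
    [intros k; apply K_simplex, Hu|].
  assert (Happrox : forall eps eta, 0 < eps -> 0 < eta ->
            exists w, K w /\ F w < - s + eps /\ vnorm P (vsub w xs) < eta).
  { intros eps eta He Het.
    destruct (Hcv eta Het) as [N1 HN1]. destruct (inv_succ_small eps He) as [N2 HN2].
    exists (u (phi (max N1 N2))). split; [apply Hu|]. split; [|apply HN1; lia].
    pose proof (proj2 (Hu (phi (max N1 N2)))).
    pose proof (strictly_increasing_ge phi Hphi (max N1 N2)).
    assert (/ (INR (phi (max N1 N2)) + 1) < eps) by (apply HN2; lia). lra. }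
  exists (- s), xs. split; [|split; auto].
  apply K_closed; auto. intros eps He.
  destruct (Happrox 1 eps ltac:(lra) He) as [w [Kw [_ Hw]]]. exists w; auto.
Qed.

Lemma interior_accumulation_minimizes (m : R) (xs : path -> R) :
  rel_int P K xs -> (forall w, K w -> m <= F w) ->
  (forall eps eta, 0 < eps -> 0 < eta -> exists w, K w /\ F w < m + eps /\ vnorm P (vsub w xs) < eta) ->
  forall w, K w -> F xs <= F w.
Proof.
  intros Hint Hm1 Happrox w Kw. apply Rle_trans with m; [|apply Hm1; auto].
  set (C := lsum P (fun p => Rabs (vadd (Gf xs) (g xs) p))).
  assert (HC : 0 <= C) by (apply lsum_nonneg; intros; apply Rabs_pos).
  apply Rge_le, (ge_of_forall_eps _ _ 2); [lra|]. intros eps He.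
  destruct (Happrox eps (eps / (C + 1)) He ltac:(apply Rdiv_lt_0_compat; lra)) as [y [Ky [Hy1 Hy2]]].
  pose proof (F_gradient_inequality xs y Hint Ky).
  pose proof (vdot_small P (vadd (Gf xs) (g xs)) (vsub y xs) eps He Hy2) as Hb.
  apply Rabs_lt_inv in Hb. lra.
Qed.

(** Being differentiable at an interior point [z], [h] is bounded above on a
    small sphere around [z] that lies in [K]. *)
Lemma bounded_on_small_sphere (z : path -> R) : rel_int P K z ->
  exists r M, 0 < r /\ h z <= M /\ forall u, tangent P u -> vnorm P u = 1 ->
    K (vadd z (vscale r u)) /\ h (vadd z (vscale r u)) <= M.
Proof.
  intros Hz. pose proof Hz as [Kz [e0 [He0 Hball]]].
  destruct (h_grad z Hz 1 ltac:(lra)) as [d1 [Hd1 Hgz]].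
  set (r := Rmin d1 e0 / 2).
  assert (Hr : 0 < r) by (apply Rdiv_lt_0_compat; [apply Rmin_glb_lt|]; lra).
  assert (Hr1 : r < d1) by (pose proof (Rmin_l d1 e0); unfold r; lra).
  assert (Hr2 : r < e0) by (pose proof (Rmin_r d1 e0); unfold r; lra).
  set (Sgz := lsum P (fun p => Rabs (g z p))).
  assert (HSgz : 0 <= Sgz) by (apply lsum_nonneg; intros; apply Rabs_pos).
  exists r, (h z + r * (Sgz + 1)). split; [exact Hr|].
  split; [assert (0 < r * (Sgz + 1)) by (apply Rmult_lt_0_compat; lra); lra|].
  intros u Hu Hu1.
  assert (Hn : vnorm P (vscale r u) = r) by (rewrite vnorm_scale, Hu1, Rabs_pos_eq; lra).
  assert (Kw : K (vadd z (vscale r u))).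
  { apply Hball; [apply hyper_vadd, tangent_scale; auto; apply simplex_hyper; auto|].
    replace (vsub (vadd z (vscale r u)) z) with (vscale r u)
      by (apply functional_extensionality; intros p; unfold vsub, vadd; ring). lra. }
  split; [exact Kw|].
  specialize (Hgz (vscale r u) (tangent_scale P r u Hu) ltac:(lra) Kw).
  pose proof (vdot_abs_le P (g z) (vscale r u)) as Hb. rewrite Hn in Hb, Hgz.
  apply Rabs_le_inv in Hb. apply Rabs_le_inv in Hgz. fold Sgz in Hb. nra.
Qed.

(** Barrier estimate: testing the gradient inequality of [h] at [y] against
    the points of that sphere bounds the size of the projected gradient
    [Phi G] by the pairing of [G] with [y - z]. *)
Lemma barrier_gradient_bound (z : path -> R) : rel_int P K z ->
  exists r D, 0 < r /\ forall y G, K y -> has_rel_grad P K h y G ->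
    r * vnorm P (Phi P G) + vdot P G (vsub z y) <= D.
Proof.
  intros Hz. assert (Kz : K z) by apply Hz.
  assert (Hzh : hyper P z) by (apply simplex_hyper; auto).
  assert (HP : P <> []) by (apply (simplex_nonempty P z); auto).
  destruct (bounded_on_small_sphere z Hz) as [r [M [Hr [HzM Hsphere]]]].
  set (L := h z - lsum P (fun p => Rabs (g z p))).
  assert (Hlow : forall w, K w -> L <= h w)
    by (intros w Kw; apply (convex_lower_bound P K h z); auto).
  exists r, (M - L). split; [exact Hr|]. intros y G Ky HG.
  assert (Hyh : hyper P y) by (apply simplex_hyper; auto).
  pose proof (Hlow y Ky).
  destruct (Req_dec (vnorm P (Phi P G)) 0) as [H0|Hpos].
  - rewrite H0.
    pose proof (gradient_inequality P K h K_convex y G z h_convex Ky Kz Hyh Hzh HG). lra.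
  - destruct (steepest_tangent_direction P G HP) as [u [Hu [Hu1 HuG]]];
      [pose proof (vnorm_ge0 P (Phi P G)); lra|].
    destruct (Hsphere u Hu Hu1) as [Kw Hw].
    pose proof (gradient_inequality P K h K_convex y G _ h_convex Ky Kw Hyh
                  (simplex_hyper _ _ (K_simplex _ Kw)) HG) as Hgi.
    replace (vdot P G (vsub (vadd z (vscale r u)) y)) with (vdot P G (vsub z y) + r * vdot P G u)
      in Hgi by (unfold vdot, vsub, vadd, vscale; rewrite <- lsum_scal, <- lsum_plus;
                 apply lsum_ext; intros; ring).
    rewrite HuG in Hgi. lra.
Qed.

Hypothesis f_grad_local_bound : forall x0, K x0 -> exists B del, 0 < del /\
  forall y, rel_int P K y -> vnorm P (vsub y x0) < del -> forall p, In p P -> Rabs (Gf y p) <= B.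

Hypothesis h_barrier : forall x0, rel_boundary P K x0 -> forall M, exists del, 0 < del /\
  forall x, rel_int P K x -> vnorm P (vsub x x0) < del -> M < vnorm P (Phi P (g x)).

(** A point of [K] approximated by near-minimizers of [F] is not on the
    boundary: at interior points [y] close to it, on the segment towards an
    interior point [z], the barrier makes [F] increase steeply towards it. *)
Lemma accumulation_not_boundary (z : path -> R) (m : R) (xs : path -> R) :
  rel_int P K z -> K xs -> (forall w, K w -> m <= F w) ->
  (forall eps eta, 0 < eps -> 0 < eta -> exists w, K w /\ F w < m + eps /\ vnorm P (vsub w xs) < eta) ->
  rel_int P K xs.
Proof.
  intros Hz Kxs Hm1 Happrox. apply NNPP; intros Hnint.
  assert (Hbd : rel_boundary P K xs)
    by (apply not_interior_boundary; auto; apply simplex_hyper; auto).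
  destruct (barrier_gradient_bound z Hz) as [r [D [Hr Hbar]]].
  destruct (f_grad_local_bound xs Kxs) as [B [dB [HdB HB]]].
  set (A := Rabs B * INR (length P)).
  assert (HA : 0 <= A) by (apply Rmult_le_pos; [apply Rabs_pos| apply pos_INR]).
  destruct (h_barrier xs Hbd ((Rabs D + A + 1) / r)) as [del [Hdel Hblow]].
  destruct (interior_points_near P K K_simplex K_convex z xs (Rmin del dB) Hz Kxs
              ltac:(apply Rmin_glb_lt; auto)) as [t [Ht [Hyint Hyd]]].
  set (y := comb t z xs) in *. assert (Ky : K y) by apply Hyint.
  pose proof (Rmin_l del dB). pose proof (Rmin_r del dB).
  (* the barrier forces a large slope of h along xs - z at y *)
  set (s := vdot P (g y) (vsub z xs)).
  assert (Hs : t * (A + 1) <= - t * s).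
  { assert (HN : (Rabs D + A + 1) / r < vnorm P (Phi P (g y))) by (apply Hblow; auto; lra).
    apply (Rmult_lt_compat_l r) in HN; [|lra].
    replace (r * ((Rabs D + A + 1) / r)) with (Rabs D + A + 1) in HN by (field; lra).
    pose proof (Hbar y (g y) Ky (h_grad y Hyint)) as Hb.
    replace (vsub z y) with (vscale (1 - t) (vsub z xs)) in Hb
      by (apply functional_extensionality; intros p; unfold y, vsub, vscale, comb; ring).
    rewrite vdot_scale in Hb. fold s in Hb. pose proof (Rle_abs D). nra. }
  (* while the slope of f along z - xs at y stays bounded by A *)
  set (sf := vdot P (Gf y) (vsub z xs)).
  assert (Hsf : Rabs sf <= A)
    by (apply vdot_simplex_bound; [intros p Hp; apply (HB y Hyint); auto; lra| |];
        apply K_simplex; [apply Hz| auto]).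
  apply Rabs_le_inv in Hsf.
  (* so F increases by at least t/2 from y to near-minimizers w close enough to xs *)
  set (Cy := lsum P (fun p => Rabs (vadd (Gf y) (g y) p))).
  assert (HCy : 0 <= Cy) by (apply lsum_nonneg; intros; apply Rabs_pos).
  destruct (Happrox (t / 2) (t / 2 / (Cy + 1)) ltac:(lra) ltac:(apply Rdiv_lt_0_compat; lra))
    as [w [Kw [Hw1 Hw2]]].
  pose proof (F_gradient_inequality y w Hyint Kw) as Hgi.
  assert (Hsplit : vdot P (vadd (Gf y) (g y)) (vsub w y)
                   = vdot P (vadd (Gf y) (g y)) (vsub w xs) - t * (sf + s))
    by (unfold sf, s; rewrite <- vdot_vadd_l; apply vdot_vsub_comb).
  rewrite Hsplit in Hgi.
  pose proof (vdot_small P (vadd (Gf y) (g y)) (vsub w xs) (t / 2) ltac:(lra) Hw2) as Hb.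
  apply Rabs_lt_inv in Hb.
  assert (t * sf <= t * A) by (apply Rmult_le_compat_l; lra).
  pose proof (Hm1 y Ky). lra.
Qed.

Theorem exists_interior_minimizer :
  (exists z, rel_int P K z) -> exists x, rel_int P K x /\ forall w, K w -> F x <= F w.
Proof.
  intros [z Hz].
  destruct (near_minimizers_cluster z Hz) as [m [xs [Kxs [Hm1 Happrox]]]].
  assert (Hint : rel_int P K xs) by (apply (accumulation_not_boundary z m); auto).
  exists xs. split; [exact Hint|]. apply (interior_accumulation_minimizes m); auto.
Qed.

End Existence.

(** * Regularity of the delay function of a link *)

Definition flow_dom (m : R -> R) (f : R) : Prop := 0 <= f /\ below_cap m f.

Lemma continuity_pt_of_eps (f : R -> R) (x : R) :
  (forall eps, 0 < eps -> exists del, 0 < del /\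
     forall y, Rabs (y - x) < del -> Rabs (f y - f x) < eps) -> continuity_pt f x.
Proof.
  intros H eps He. destruct (H eps He) as [d [Hd H']].
  exists d; split; auto. intros y [_ Hy]. simpl in *. unfold Rdist in *. auto.
Qed.

Lemma eps_of_continuity_pt (f : R -> R) (x : R) : continuity_pt f x ->
  forall eps, 0 < eps -> exists del, 0 < del /\
    forall y, Rabs (y - x) < del -> Rabs (f y - f x) < eps.
Proof.
  intros H eps He. destruct (H eps He) as [d [Hd H']]. exists d; split; auto. intros y Hy.
  destruct (Req_dec y x) as [->|Hne]; [rewrite Rminus_diag, Rabs_R0; auto|].
  apply (H' y). split; [split; [exact I| auto]|]. simpl; unfold Rdist; auto.
Qed.

Section FlowDensity.
Variables m m' : R -> R.
Hypothesis m_fd : flow_density m m'.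

Lemma mu_zero : m 0 = 0.
Proof. apply m_fd. Qed.

Lemma mu_lt (x y : R) : 0 <= x -> x < y -> m x < m y.
Proof. apply m_fd. Qed.

Lemma mu_le (x y : R) : 0 <= x -> x <= y -> m x <= m y.
Proof. intros Hx Hxy. destruct (Req_dec x y) as [->|]; [lra|]. apply Rlt_le, mu_lt; lra. Qed.

Lemma mu_pos (r : R) : 0 < r -> 0 < m r.
Proof. intros Hr. rewrite <- mu_zero. apply mu_lt; lra. Qed.

Lemma mu_injective (r1 r2 : R) : 0 <= r1 -> 0 <= r2 -> m r1 = m r2 -> r1 = r2.
Proof.
  intros H1 H2 He. destruct (Rtotal_order r1 r2) as [H|[H|H]]; auto.
  - pose proof (mu_lt r1 r2 H1 H); lra.
  - pose proof (mu_lt r2 r1 H2 H); lra.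
Qed.

Lemma slope_limit_at_0 (eps : R) : 0 < eps -> exists del, 0 < del /\
  forall y, 0 < y < del -> Rabs (m y / y - m' 0) < eps.
Proof.
  intros He. destruct m_fd as [_ [_ [_ [_ [_ [H _]]]]]].
  destruct (H eps He) as [d [Hd Hd']]. exists d; split; auto. intros y Hy.
  specialize (Hd' y Hy). rewrite mu_zero, Rminus_0_r in Hd'. exact Hd'.
Qed.

(** By concavity and [m 0 = 0], the slope [m r / r] is decreasing ... *)
Lemma slope_decreasing (r1 r2 : R) : 0 < r1 -> r1 < r2 -> m r2 / r2 < m r1 / r1.
Proof.
  intros H1 H2. destruct m_fd as [_ [_ [_ [Hc _]]]].
  assert (Ht : 0 < r1 / r2 < 1)
    by (split; [apply Rdiv_lt_0_compat; lra| apply (Rmult_lt_reg_r r2); [lra|]; field_simplify; lra]).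
  specialize (Hc r2 0 (r1 / r2) ltac:(lra) ltac:(lra) ltac:(lra) Ht). rewrite mu_zero in Hc.
  replace (r1 / r2 * r2 + (1 - r1 / r2) * 0) with r1 in Hc by (field; lra).
  apply (Rmult_lt_reg_r r1); [lra|].
  replace (m r1 / r1 * r1) with (m r1) by (field; lra).
  replace (m r2 / r2 * r1) with (r1 / r2 * m r2) by (field; lra). lra.
Qed.

(** ... hence bounded by its limit [m' 0] at [0], which is positive. *)
Lemma slope_le_deriv0 (r : R) : 0 < r -> m r / r <= m' 0.
Proof.
  intros Hr. destruct (Rle_dec (m r / r) (m' 0)) as [|Hn]; auto. exfalso.
  destruct (slope_limit_at_0 (m r / r - m' 0) ltac:(lra)) as [d [Hd Hd']].
  pose proof (Rmin_l (d / 2) (r / 2)). pose proof (Rmin_r (d / 2) (r / 2)).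
  set (y := Rmin (d / 2) (r / 2)) in *.
  assert (Hy : 0 < y) by (apply Rmin_glb_lt; lra).
  specialize (Hd' y ltac:(lra)). apply Rabs_lt_inv in Hd'.
  pose proof (slope_decreasing y r Hy ltac:(lra)). lra.
Qed.

Lemma deriv0_pos : 0 < m' 0.
Proof.
  pose proof (slope_le_deriv0 1 ltac:(lra)). pose proof (mu_pos 1 ltac:(lra)).
  assert (0 < m 1 / 1) by (apply Rdiv_lt_0_compat; lra). lra.
Qed.

Lemma mu_continuous (x : R) : 0 <= x -> forall eps, 0 < eps -> exists del, 0 < del /\
  forall y, 0 <= y -> Rabs (y - x) < del -> Rabs (m y - m x) < eps.
Proof.
  intros Hx eps He. destruct (Req_dec x 0) as [->|Hx0].
  - (* at 0, [0 <= m y <= m' 0 * y] *)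
    pose proof deriv0_pos as Hp.
    exists (eps / m' 0). split; [apply Rdiv_lt_0_compat; lra|]. intros y Hy Hyd.
    rewrite Rminus_0_r, Rabs_pos_eq in Hyd by lra. rewrite mu_zero, Rminus_0_r.
    destruct (Req_dec y 0) as [->|Hy0]; [rewrite mu_zero, Rabs_R0; lra|].
    assert (Hslope : m y <= m' 0 * y).
    { pose proof (slope_le_deriv0 y ltac:(lra)).
      replace (m y) with (m y / y * y) by (field; lra). apply Rmult_le_compat_r; lra. }
    pose proof (mu_pos y ltac:(lra)). rewrite Rabs_pos_eq by lra.
    apply (Rmult_lt_compat_l (m' 0)) in Hyd; [|lra].
    replace (m' 0 * (eps / m' 0)) with eps in Hyd by (field; lra). lra.
  - (* for x > 0, [m] is differentiable at x *)
    destruct m_fd as [_ [_ [_ [_ [Hd _]]]]].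
    assert (Hc : continuity_pt m x)
      by (apply derivable_continuous_pt; exists (m' x); apply Hd; lra).
    destruct (eps_of_continuity_pt m x Hc eps He) as [d [Hd0 Hd1]]. exists d; split; auto.
Qed.

Lemma mu_surjective (f : R) : flow_dom m f -> exists r, 0 <= r /\ m r = f.
Proof.
  intros [Hf [r1 [Hr1 Hlt]]].
  destruct (Req_dec f 0) as [->|Hf0]; [exists 0; split; [lra| apply mu_zero]|].
  assert (Hr1p : 0 < r1) by (destruct (Req_dec r1 0) as [->|]; [rewrite mu_zero in Hlt|]; lra).
  (* intermediate value theorem for the continuous extension [x |-> m (max 0 x) - f] *)
  set (G := fun x => m (Rmax 0 x) - f).
  destruct (Ranalysis5.IVT_interv G 0 r1) as [z [Hz HGz]].
  - intros a Ha. apply continuity_pt_of_eps. intros eps He.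
    destruct (mu_continuous (Rmax 0 a) (Rmax_l 0 a) eps He) as [d [Hd Hd']].
    exists d; split; auto. intros y Hy. unfold G.
    replace (m (Rmax 0 y) - f - (m (Rmax 0 a) - f)) with (m (Rmax 0 y) - m (Rmax 0 a)) by ring.
    apply Hd'; [apply Rmax_l|]. apply Rle_lt_trans with (Rabs (y - a)); auto.
    unfold Rmax; destruct (Rle_dec 0 y), (Rle_dec 0 a); apply Rabs_le;
      unfold Rabs; destruct (Rcase_abs (y - a)); lra.
  - exact Hr1p.
  - unfold G. rewrite Rmax_left, mu_zero by lra. lra.
  - unfold G. rewrite Rmax_right by lra. lra.
  - exists z. split; [lra|]. unfold G in HGz. rewrite Rmax_right in HGz by lra. lra.
Qed.

Lemma muinv_spec (f : R) : flow_dom m f -> 0 <= muinv m f /\ m (muinv m f) = f.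
Proof.
  intros Hd. apply (epsilon_spec (inhabits 0) (fun r => 0 <= r /\ m r = f)), mu_surjective, Hd.
Qed.

Lemma muinv_eq (f r : R) : flow_dom m f -> 0 <= r -> m r = f -> muinv m f = r.
Proof. intros Hd Hr Hm. destruct (muinv_spec f Hd). apply mu_injective; auto; congruence. Qed.

Lemma flow_dom_down (f f' : R) : flow_dom m f -> 0 <= f' <= f -> flow_dom m f'.
Proof. intros [_ [r [Hr Hl]]] H. split; [lra|]. exists r; split; auto; lra. Qed.

Lemma muinv_mono (a b : R) : flow_dom m a -> flow_dom m b -> a <= b -> muinv m a <= muinv m b.
Proof.
  intros Ha Hb Hab. destruct (muinv_spec a Ha) as [Ha1 Ha2]. destruct (muinv_spec b Hb) as [Hb1 Hb2].
  destruct (Rle_dec (muinv m a) (muinv m b)) as [|Hn]; auto.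
  pose proof (mu_lt (muinv m b) (muinv m a) Hb1 ltac:(lra)). lra.
Qed.

(** The inverse of a continuous increasing function is continuous: flows
    within [m (r0 - eps/2), m (r0 + eps/2)] have densities within [eps/2] of [r0]. *)
Lemma muinv_continuous (c : R) : flow_dom m c -> forall eps, 0 < eps -> exists del, 0 < del /\
  forall f, flow_dom m f -> Rabs (f - c) < del -> Rabs (muinv m f - muinv m c) < eps.
Proof.
  intros Hc eps He. destruct (muinv_spec c Hc) as [Hr0 Hmr0]. set (r0 := muinv m c) in *.
  set (hi := m (r0 + eps / 2)).
  assert (Hhi : c < hi) by (unfold hi; rewrite <- Hmr0; apply mu_lt; lra).
  set (lo := if Rlt_dec 0 (r0 - eps / 2) then m (r0 - eps / 2) else - 1).
  assert (Hlo : lo < c).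
  { unfold lo; destruct (Rlt_dec 0 (r0 - eps / 2)); [rewrite <- Hmr0; apply mu_lt| destruct Hc]; lra. }
  exists (Rmin (hi - c) (c - lo)). split; [apply Rmin_glb_lt; lra|].
  intros f Hf Hfc. pose proof (Rmin_l (hi - c) (c - lo)). pose proof (Rmin_r (hi - c) (c - lo)).
  apply Rabs_lt_inv in Hfc. destruct (muinv_spec f Hf) as [Hr Hmr].
  assert (muinv m f < r0 + eps / 2).
  { destruct (Rlt_dec (muinv m f) (r0 + eps / 2)) as [|Hn]; auto.
    assert (hi <= m (muinv m f)) by (unfold hi; apply mu_le; lra). lra. }
  assert (r0 - eps < muinv m f).
  { destruct (Rlt_dec 0 (r0 - eps / 2)) as [Hpos|]; [|lra].
    destruct (Rlt_dec (r0 - eps / 2) (muinv m f)) as [|Hn]; [lra|].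
    assert (m (muinv m f) <= m (r0 - eps / 2)) by (apply mu_le; lra).
    unfold lo in *; destruct (Rlt_dec 0 (r0 - eps / 2)); lra. }
  apply Rabs_def1; lra.
Qed.

(** The delay as a function of the density: [r / m r], extended by
    continuity with [1 / m' 0] at [0]. *)
Definition inv_slope (r : R) : R := if Req_EM_T r 0 then / m' 0 else r / m r.

Lemma delay_inv_slope (f : R) : flow_dom m f -> delay m m' f = inv_slope (muinv m f).
Proof.
  intros Hd. unfold delay, inv_slope. destruct (muinv_spec f Hd) as [H1 H2].
  destruct (Req_EM_T f 0) as [->|Hf].
  - rewrite (muinv_eq 0 0 Hd ltac:(lra) mu_zero). destruct (Req_EM_T 0 0); [auto| congruence].
  - destruct (Req_EM_T (muinv m f) 0) as [He|He]; [rewrite He, mu_zero in H2; congruence|].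
    rewrite H2. reflexivity.
Qed.

Lemma inv_slope_pos (r : R) : 0 <= r -> 0 < inv_slope r.
Proof.
  intros Hr. unfold inv_slope. destruct Req_EM_T; [apply Rinv_0_lt_compat, deriv0_pos|].
  apply Rdiv_lt_0_compat; [lra| apply mu_pos; lra].
Qed.

(** [r / m r] increases because [m r / r] decreases. *)
Lemma inv_slope_mono (r1 r2 : R) : 0 <= r1 <= r2 -> inv_slope r1 <= inv_slope r2.
Proof.
  intros H. unfold inv_slope.
  destruct (Req_EM_T r1 0) as [->|H1]; destruct (Req_EM_T r2 0) as [->|H2]; try lra.
  - pose proof (slope_le_deriv0 r2 ltac:(lra)). pose proof (mu_pos r2 ltac:(lra)).
    pose proof deriv0_pos.
    replace (r2 / m r2) with (/ (m r2 / r2)) by (field; lra).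
    apply Rinv_le_contravar; [apply Rdiv_lt_0_compat; lra| exact H0].
  - destruct (Req_dec r1 r2) as [->|H3]; [lra|].
    pose proof (slope_decreasing r1 r2 ltac:(lra) ltac:(lra)).
    pose proof (mu_pos r2 ltac:(lra)). pose proof (mu_pos r1 ltac:(lra)).
    replace (r2 / m r2) with (/ (m r2 / r2)) by (field; lra).
    replace (r1 / m r1) with (/ (m r1 / r1)) by (field; lra).
    apply Rlt_le, Rinv_lt_contravar; [apply Rmult_lt_0_compat; apply Rdiv_lt_0_compat|]; lra.
Qed.

Lemma inv_slope_continuous (r0 : R) : 0 <= r0 -> forall eps, 0 < eps -> exists del, 0 < del /\
  forall r, 0 <= r -> Rabs (r - r0) < del -> Rabs (inv_slope r - inv_slope r0) < eps.
Proof.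
  intros Hr0 eps He. destruct (Req_dec r0 0) as [->|Hne].
  - (* at 0: [| 1/s - 1/a | = |a - s| / (s a)] with [s = m r / r] close to [a = m' 0] *)
    pose proof deriv0_pos as Hp. set (a := m' 0) in *.
    destruct (slope_limit_at_0 (Rmin (a / 2) (eps * a * a / 4))) as [d [Hd Hd']].
    { apply Rmin_glb_lt; [lra|]. assert (0 < a * a) by nra. apply Rdiv_lt_0_compat; nra. }
    exists d; split; auto. intros r Hr Hrd. rewrite Rminus_0_r, Rabs_pos_eq in Hrd by auto.
    unfold inv_slope. destruct (Req_EM_T 0 0) as [_|]; [|congruence].
    destruct (Req_EM_T r 0) as [->|Hr0']; [rewrite Rminus_diag, Rabs_R0; auto|].
    specialize (Hd' r ltac:(lra)). fold a in Hd'.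
    pose proof (Rmin_l (a / 2) (eps * a * a / 4)). pose proof (Rmin_r (a / 2) (eps * a * a / 4)).
    apply Rabs_lt_inv in Hd'. set (s := m r / r) in *.
    assert (Hmr : 0 < m r) by (apply mu_pos; lra).
    fold a. replace (r / m r - / a) with ((a - s) / (s * a)) by (unfold s; field; lra).
    unfold Rdiv. rewrite Rabs_mult, Rabs_inv, (Rabs_pos_eq (s * a)) by nra.
    apply (Rmult_lt_reg_r (s * a)); [nra|]. rewrite Rmult_assoc, Rinv_l, Rmult_1_r by nra.
    apply Rle_lt_trans with (eps * a * a / 4); [apply Rabs_le; lra| nra].
  - (* away from 0, [r / m r] is a quotient of continuous functions *)
    destruct m_fd as [_ [_ [_ [_ [Hd _]]]]].
    assert (Hc : continuity_pt (fun r => r / m r) r0).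
    { apply continuity_pt_div; [apply derivable_continuous_pt, derivable_pt_id| |].
      - apply derivable_continuous_pt; exists (m' r0); apply Hd; lra.
      - pose proof (mu_pos r0 ltac:(lra)); lra. }
    destruct (eps_of_continuity_pt _ r0 Hc eps He) as [d [Hd0 Hd1]].
    exists (Rmin d r0). split; [apply Rmin_glb_lt; lra|]. intros r Hr Hrd.
    pose proof (Rmin_l d r0). pose proof (Rmin_r d r0). apply Rabs_lt_inv in Hrd as Hrd'.
    unfold inv_slope. destruct (Req_EM_T r 0); [lra|]. destruct (Req_EM_T r0 0); [lra|].
    apply Hd1. lra.
Qed.

Lemma delay_continuous (c : R) : flow_dom m c -> forall eps, 0 < eps -> exists del, 0 < del /\
  forall f, flow_dom m f -> Rabs (f - c) < del -> Rabs (delay m m' f - delay m m' c) < eps.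
Proof.
  intros Hc eps He. destruct (muinv_spec c Hc) as [H1 _].
  destruct (inv_slope_continuous (muinv m c) H1 eps He) as [d1 [Hd1 Hd1']].
  destruct (muinv_continuous c Hc d1 Hd1) as [d2 [Hd2 Hd2']].
  exists d2; split; auto. intros f Hf Hfc. rewrite !delay_inv_slope by auto.
  apply Hd1'; [apply muinv_spec; auto| auto].
Qed.

Lemma delay_mono (a b : R) : flow_dom m a -> flow_dom m b -> a <= b -> delay m m' a <= delay m m' b.
Proof.
  intros Ha Hb Hab. rewrite !delay_inv_slope by auto.
  apply inv_slope_mono. split; [apply muinv_spec; auto| apply muinv_mono; auto].
Qed.

Lemma delay_pos (a : R) : flow_dom m a -> 0 < delay m m' a.
Proof. intros Ha. rewrite delay_inv_slope by auto. apply inv_slope_pos, muinv_spec; auto. Qed.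

End FlowDensity.

(** * The link potentials [int_0^f T_e] *)

Lemma clamp_lipschitz (a x y : R) :
  Rabs (Rmax 0 (Rmin y a) - Rmax 0 (Rmin x a)) <= Rabs (y - x).
Proof.
  unfold Rmax, Rmin. repeat destruct Rle_dec; apply Rabs_le;
    unfold Rabs; destruct (Rcase_abs (y - x)); lra.
Qed.

Section LinkPotential.
Variables m m' : R -> R.
Hypothesis m_fd : flow_density m m'.

(** The delay is continuous on [[0, a]] for every feasible [a], hence integrable. *)
Lemma delay_integrable (a : R) : flow_dom m a -> Riemann_integrable (delay m m') 0 a.
Proof.
  intros Ha. assert (Ha0 : 0 <= a) by apply Ha.
  set (cl := fun x => Rmax 0 (Rmin x a)).
  assert (Hcl : forall x, flow_dom m (cl x))
    by (intros x; apply (flow_dom_down m a); auto; unfold cl, Rmax, Rmin; repeat destruct Rle_dec; lra).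
  assert (Hi : Riemann_integrable (fun x => delay m m' (cl x)) 0 a).
  { apply continuity_implies_RiemannInt; auto. intros x _. apply continuity_pt_of_eps.
    intros eps He. destruct (delay_continuous m m' m_fd (cl x) (Hcl x) eps He) as [d [Hd Hd']].
    exists d; split; auto. intros y Hy. apply Hd'; auto.
    eapply Rle_lt_trans; [apply clamp_lipschitz| auto]. }
  apply (Riemann_integrable_ext (fun x => delay m m' x)) in Hi; auto.
  intros x Hx. rewrite Rmin_left, Rmax_right in Hx by auto. unfold cl.
  rewrite Rmin_left, Rmax_right by lra. reflexivity.
Qed.

Lemma Rint_RiemannInt (a : R) (pr : Riemann_integrable (delay m m') 0 a) :
  Rint (delay m m') 0 a = RiemannInt pr.
Proof.
  unfold Rint. destruct excluded_middle_informative as [H|H]; [apply RiemannInt_P5|].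
  exfalso; apply H; constructor; exact pr.
Qed.

(** Since the delay is nondecreasing, the increment of its integral over
    [[a, b]] lies between [T a (b - a)] and [T b (b - a)]. *)
Lemma potential_increment_bounds (a b : R) : 0 <= a <= b -> flow_dom m b ->
  delay m m' a * (b - a) <= Rint (delay m m') 0 b - Rint (delay m m') 0 a <= delay m m' b * (b - a).
Proof.
  intros Hab Hb.
  assert (Ha : flow_dom m a) by (apply (flow_dom_down m b); auto).
  pose proof (delay_integrable b Hb) as pr0b. pose proof (delay_integrable a Ha) as pr0a.
  pose proof (RiemannInt_P23 pr0b (conj (proj1 Hab) (proj2 Hab))) as prab.
  rewrite (Rint_RiemannInt b pr0b), (Rint_RiemannInt a pr0a), <- (RiemannInt_P26 pr0a prab pr0b).
  replace (RiemannInt pr0a + RiemannInt prab - RiemannInt pr0a) with (RiemannInt prab) by ring.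
  assert (Hx : forall x, a <= x <= b -> flow_dom m x) by (intros; apply (flow_dom_down m b); auto; lra).
  split.
  - rewrite <- (RiemannInt_P15 (RiemannInt_P14 a b (delay m m' a))).
    apply RiemannInt_P19; [lra|]. intros x Hxab. apply delay_mono; auto; [apply Hx|]; lra.
  - rewrite <- (RiemannInt_P15 (RiemannInt_P14 a b (delay m m' b))).
    apply RiemannInt_P19; [lra|]. intros x Hxab. apply delay_mono; auto; [apply Hx|]; lra.
Qed.

(** Hence the potential is convex with derivative [T]: the tangent inequality ... *)
Lemma potential_tangent (a b : R) : flow_dom m a -> flow_dom m b ->
  Rint (delay m m') 0 b - Rint (delay m m') 0 a >= delay m m' a * (b - a).
Proof.
  intros Ha Hb. destruct (Rle_dec a b) as [H|H].
  - pose proof (potential_increment_bounds a b (conj (proj1 Ha) H) Hb). lra.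
  - apply Rnot_le_lt in H.
    pose proof (potential_increment_bounds b a (conj (proj1 Hb) (Rlt_le _ _ H)) Ha). nra.
Qed.

Lemma potential_deriv (a : R) : flow_dom m a -> forall eps, 0 < eps -> exists del, 0 < del /\
  forall b, flow_dom m b -> Rabs (b - a) < del ->
    Rabs (Rint (delay m m') 0 b - Rint (delay m m') 0 a - delay m m' a * (b - a)) <= eps * Rabs (b - a).
Proof.
  intros Ha eps He. destruct (delay_continuous m m' m_fd a Ha eps He) as [d [Hd Hd']].
  exists d; split; auto. intros b Hb Hba. specialize (Hd' b Hb Hba). apply Rabs_lt_inv in Hd'.
  destruct (Rle_dec a b) as [H|H].
  - pose proof (potential_increment_bounds a b (conj (proj1 Ha) H) Hb).
    rewrite (Rabs_pos_eq (b - a)) by lra. apply Rabs_le. split; nra.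
  - apply Rnot_le_lt in H.
    pose proof (potential_increment_bounds b a (conj (proj1 Hb) (Rlt_le _ _ H)) Ha).
    rewrite (Rabs_left (b - a)) by lra. apply Rabs_le. split; nra.
Qed.

End LinkPotential.

(** * Link flows and path costs *)

Definition path_cost (E : list edge) (c : edge -> R) : path -> R :=
  fun p => lsum E (fun e => if in_dec edge_eq_dec e p then c e else 0).

Lemma link_cost_pairing (E : list edge) (P : list path) (c : edge -> R) (w : path -> R) :
  lsum E (fun e => Aflow P w e * c e) = vdot P (path_cost E c) w.
Proof.
  unfold Aflow, vdot, path_cost.
  rewrite (lsum_ext E _ (fun e => lsum P (fun p => (if in_dec edge_eq_dec e p then w p else 0) * c e)))
    by (intros; rewrite lsum_scalr; auto).
  rewrite lsum_swap. apply lsum_ext; intros p _. rewrite <- lsum_scalr. apply lsum_ext; intros e _.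
  destruct in_dec; ring.
Qed.

Lemma Aflow_comb (P : list path) (t : R) (x y : path -> R) (e : edge) :
  Aflow P (comb t x y) e = t * Aflow P x e + (1 - t) * Aflow P y e.
Proof.
  unfold Aflow, comb. rewrite <- !lsum_scal, <- lsum_plus. apply lsum_ext; intros.
  destruct in_dec; ring.
Qed.

Lemma Aflow_vadd (P : list path) (x v : path -> R) (e : edge) :
  Aflow P (vadd x v) e = Aflow P x e + Aflow P v e.
Proof. unfold Aflow, vadd. rewrite <- lsum_plus. apply lsum_ext; intros. destruct in_dec; ring. Qed.

Lemma Aflow_vsub (P : list path) (x v : path -> R) (e : edge) :
  Aflow P (vsub x v) e = Aflow P x e - Aflow P v e.
Proof. unfold Aflow, vsub. rewrite <- lsum_minus. apply lsum_ext; intros. destruct in_dec; ring. Qed.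

Lemma Aflow_abs (P : list path) (v : path -> R) (e : edge) :
  Rabs (Aflow P v e) <= INR (length P) * vnorm P v.
Proof.
  unfold Aflow. eapply Rle_trans; [apply lsum_abs|]. rewrite <- lsum_const.
  apply lsum_le; intros p Hp. destruct in_dec; [apply vnorm_coord; auto|].
  rewrite Rabs_R0; apply vnorm_ge0.
Qed.

Lemma Aflow_nonneg (P : list path) (x : path -> R) (e : edge) : simplex P x -> 0 <= Aflow P x e.
Proof.
  intros [_ [H _]]. unfold Aflow. apply lsum_nonneg; intros p Hp. destruct in_dec; auto; lra.
Qed.

(** A [del]-ball in R^P is mapped into a [|P| del]-ball of link flows; the
    radius [d / (|P| + 1)] is therefore small enough for link accuracy [d]. *)
Lemma Aflow_close (P : list path) (x y : path -> R) (e : edge) (d : R) :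
  0 < d -> vnorm P (vsub y x) < d / (INR (length P) + 1) -> Rabs (Aflow P y e - Aflow P x e) < d.
Proof.
  intros Hd Hyx. rewrite <- Aflow_vsub. eapply Rle_lt_trans; [apply Aflow_abs|].
  pose proof (pos_INR (length P)). pose proof (vnorm_ge0 P (vsub y x)).
  apply Rle_lt_trans with (INR (length P) * (d / (INR (length P) + 1))).
  - apply Rmult_le_compat_l; lra.
  - apply mul_div_succ_lt; lra.
Qed.

Lemma sum_locally_bounded {A X : Type} (l : list A) (S : X -> Prop) (dist : X -> R)
    (F : A -> X -> R) :
  (forall a, In a l -> exists b d, 0 < d /\ forall y, S y -> dist y < d -> Rabs (F a y) <= b) ->
  exists B d, 0 < d /\ forall y, S y -> dist y < d -> lsum l (fun a => Rabs (F a y)) <= B.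
Proof.
  induction l as [|a l IH]; intros H.
  - exists 0, 1. split; [lra|]. intros. simpl. lra.
  - destruct IH as [B1 [d1 [Hd1 H1]]]; [intros b Hb; apply H; simpl; auto|].
    destruct (H a (or_introl eq_refl)) as [b [d2 [Hd2 H2]]].
    exists (b + B1), (Rmin d1 d2). split; [apply Rmin_glb_lt; auto|].
    intros y Sy Hy. rewrite lsum_cons.
    pose proof (H1 y Sy (Rlt_le_trans _ _ _ Hy (Rmin_l _ _))).
    pose proof (H2 y Sy (Rlt_le_trans _ _ _ Hy (Rmin_r _ _))). lra.
Qed.

(** * The Beckmann potential [Psi(pi) = sum_e int_0^{(A pi)_e} T_e] *)

Section Beckmann.
Variables (E : list edge) (P : list path) (mu mu' : edge -> R -> R) (K : (path -> R) -> Prop).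
Hypothesis links_fd : forall e, In e E -> flow_density (mu e) (mu' e).
Hypothesis K_feasible : forall x, K x -> PiSet E P mu x.

Definition beckmann (w : path -> R) : R :=
  lsum E (fun e => Rint (delay (mu e) (mu' e)) 0 (Aflow P w e)).

Definition beckmann_grad (x : path -> R) : path -> R :=
  path_cost E (fun e => delay (mu e) (mu' e) (Aflow P x e)).

Lemma feasible_link_flow (x : path -> R) (e : edge) : K x -> In e E -> flow_dom (mu e) (Aflow P x e).
Proof. intros Kx He. split; [apply Aflow_nonneg, K_feasible; auto| apply (K_feasible x Kx); auto]. Qed.

Lemma beckmann_convex : convex_set K -> convex_on K beckmann.
Proof.
  intros Hc x y t Kx Ky Ht. assert (Kc : K (comb t x y)) by (apply Hc; auto).
  unfold beckmann. rewrite <- !lsum_scal, <- lsum_plus. apply lsum_le; intros e He.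
  pose proof (potential_tangent _ _ (links_fd e He) _ _ (feasible_link_flow _ e Kc He)
                (feasible_link_flow _ e Kx He)) as H1.
  pose proof (potential_tangent _ _ (links_fd e He) _ _ (feasible_link_flow _ e Kc He)
                (feasible_link_flow _ e Ky He)) as H2.
  rewrite Aflow_comb in *. set (a := Aflow P x e) in *. set (b := Aflow P y e) in *.
  set (Tc := delay (mu e) (mu' e) (t * a + (1 - t) * b)) in *.
  set (I := Rint (delay (mu e) (mu' e)) 0) in *.
  (* the convex combination of the two tangent inequalities at [t a + (1-t) b] *)
  assert (t * (I a - I (t * a + (1 - t) * b)) >= t * (Tc * (a - (t * a + (1 - t) * b))))
    by (apply Rle_ge, Rmult_le_compat_l; lra).
  assert ((1 - t) * (I b - I (t * a + (1 - t) * b)) >= (1 - t) * (Tc * (b - (t * a + (1 - t) * b))))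
    by (apply Rle_ge, Rmult_le_compat_l; lra).
  assert (t * (Tc * (a - (t * a + (1 - t) * b))) + (1 - t) * (Tc * (b - (t * a + (1 - t) * b))) = 0)
    by ring.
  lra.
Qed.

Lemma beckmann_has_grad (x : path -> R) : K x -> has_rel_grad P K beckmann x (beckmann_grad x).
Proof.
  intros Kx eps He.
  set (nP := INR (length P)). set (nE := INR (length E)).
  assert (HnP : 0 <= nP) by apply pos_INR. assert (HnE : 0 <= nE) by apply pos_INR.
  set (e' := eps / ((nE + 1) * (nP + 1))).
  assert (He' : 0 < e') by (apply Rdiv_lt_0_compat; nra).
  destruct (common_radius E (fun e d => forall b, flow_dom (mu e) b -> Rabs (b - Aflow P x e) < d ->
      Rabs (Rint (delay (mu e) (mu' e)) 0 b - Rint (delay (mu e) (mu' e)) 0 (Aflow P x e)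
            - delay (mu e) (mu' e) (Aflow P x e) * (b - Aflow P x e)) <= e' * Rabs (b - Aflow P x e)))
    as [d0 [Hd0 Hd0']].
  { intros e d d' Hd Hq b Hb Hbd. apply Hq; auto; lra. }
  { intros e He0. apply potential_deriv; auto. apply feasible_link_flow; auto. }
  exists (d0 / (nP + 1)). split; [apply Rdiv_lt_0_compat; lra|].
  intros v Hv Hvn Kv.
  unfold beckmann, beckmann_grad. rewrite <- link_cost_pairing, <- !lsum_minus.
  eapply Rle_trans; [apply lsum_abs|].
  apply Rle_trans with (lsum E (fun _ => e' * (nP * vnorm P v))).
  - apply lsum_le; intros e He0.
    assert (Hclose : Rabs (Aflow P (vadd x v) e - Aflow P x e) < d0).
    { apply Aflow_close; auto.
      replace (vsub (vadd x v) x) with v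
        by (apply functional_extensionality; intros p; unfold vsub, vadd; ring). exact Hvn. }
    specialize (Hd0' e He0 _ (feasible_link_flow _ e Kv He0) Hclose).
    rewrite Aflow_vadd in Hd0'. replace (Aflow P x e + Aflow P v e - Aflow P x e)
      with (Aflow P v e) in Hd0' by ring.
    rewrite Aflow_vadd, (Rmult_comm (Aflow P v e)). eapply Rle_trans; [exact Hd0'|].
    apply Rmult_le_compat_l; [lra| apply Aflow_abs].
  - rewrite lsum_const. fold nE. unfold e'. pose proof (vnorm_ge0 P v).
    replace (nE * (eps / ((nE + 1) * (nP + 1)) * (nP * vnorm P v)))
      with (eps * vnorm P v * ((nE * nP) / ((nE + 1) * (nP + 1)))) by (field; lra).
    rewrite <- (Rmult_1_r (eps * vnorm P v)) at 2. apply Rmult_le_compat_l; [nra|].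
    apply (Rmult_le_reg_l ((nE + 1) * (nP + 1))); [nra|]. field_simplify; nra.
Qed.

(** Near a feasible point, each link delay stays below the delay of a flow
    halfway to the capacity. *)
Lemma delay_locally_bounded (e : edge) (x0 : path -> R) : In e E -> K x0 ->
  exists b del, 0 < del /\ forall y, K y -> vnorm P (vsub y x0) < del ->
    Rabs (delay (mu e) (mu' e) (Aflow P y e)) <= b.
Proof.
  intros He Kx0. pose proof (feasible_link_flow x0 e Kx0 He) as [Ha0 [r [Hr Hlt]]].
  set (a := Aflow P x0 e) in *. set (b := (a + mu e r) / 2).
  assert (Hb : flow_dom (mu e) b) by (split; [unfold b| exists r; split; [| unfold b]]; lra).
  exists (delay (mu e) (mu' e) b), ((b - a) / (INR (length P) + 1)).
  split; [apply Rdiv_lt_0_compat; [unfold b| pose proof (pos_INR (length P))]; lra|].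
  intros y Ky Hy. pose proof (feasible_link_flow y e Ky He) as Hdy.
  rewrite Rabs_pos_eq by (apply Rlt_le, delay_pos; auto).
  apply delay_mono; auto.
  assert (Hclose : Rabs (Aflow P y e - a) < b - a) by (apply Aflow_close; [unfold b; lra| exact Hy]).
  apply Rabs_lt_inv in Hclose. lra.
Qed.

Lemma beckmann_grad_locally_bounded (x0 : path -> R) : K x0 ->
  exists B del, 0 < del /\ forall y, rel_int P K y -> vnorm P (vsub y x0) < del ->
    forall p, In p P -> Rabs (beckmann_grad y p) <= B.
Proof.
  intros Kx0.
  destruct (sum_locally_bounded E K (fun y => vnorm P (vsub y x0))
              (fun e y => delay (mu e) (mu' e) (Aflow P y e))) as [B [d [Hd HB]]].
  { intros e He. apply delay_locally_bounded; auto. }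
  exists B, d. split; [exact Hd|]. intros y [Ky _] Hy p _.
  eapply Rle_trans; [apply lsum_abs| eapply Rle_trans; [| apply (HB y Ky Hy)]].
  apply lsum_le; intros e _. destruct in_dec; [lra|]. rewrite Rabs_R0; apply Rabs_pos.
Qed.

End Beckmann.

(** * Equilibrium of the perturbed best response *)

Section Equilibrium.
Variables (E : list edge) (P : list path) (mu mu' : edge -> R -> R)
          (K : (path -> R) -> Prop) (h : (path -> R) -> R) (g : (path -> R) -> path -> R).
Hypothesis links_fd : forall e, In e E -> flow_density (mu e) (mu' e).
Hypothesis K_feasible : forall x, K x -> PiSet E P mu x.
Hypothesis K_closed : Defs.closed_set P K.
Hypothesis K_convex : convex_set K.
Hypothesis K_interior : exists x, rel_int P K x.
Hypothesis h_strict : strictly_convex_on K h.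
Hypothesis h_grad : forall x, rel_int P K x -> has_rel_grad P K h x (g x).
Hypothesis h_barrier : forall x0, rel_boundary P K x0 -> forall M, exists del, 0 < del /\
  forall x, rel_int P K x -> vnorm P (vsub x x0) < del -> M < vnorm P (Phi P (g x)).

Let K_simplex (x : path -> R) (Kx : K x) : simplex P x := proj1 (K_feasible x Kx).
Let K_hyper (x : path -> R) (Kx : K x) : hyper P x := simplex_hyper P x (K_simplex x Kx).
Let h_convex : convex_on K h := strictly_convex_convex K h h_strict.

Lemma psi_strictly_convex : strictly_convex_on K (psi E P mu mu' h).
Proof. apply strictly_convex_plus; auto. apply beckmann_convex; auto. Qed.

Lemma psi_grad (x : path -> R) : rel_int P K x ->
  has_rel_grad P K (psi E P mu mu' h) x (vadd (beckmann_grad E P mu mu' x) (g x)).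
Proof. intros Hx. apply has_rel_grad_plus; auto. apply beckmann_has_grad; auto. apply Hx. Qed.

Definition br_objective (C : path -> R) (w : path -> R) : R := vdot P C w + h w.

Lemma Fh_argmin (f : edge -> R) :
  Fh E P mu mu' K h f = argmin K (br_objective (path_cost E (fun e => delay (mu e) (mu' e) (f e)))).
Proof.
  unfold Fh. f_equal. apply functional_extensionality; intros w.
  unfold br_objective. rewrite link_cost_pairing. reflexivity.
Qed.

Lemma br_objective_strictly_convex (C : path -> R) : strictly_convex_on K (br_objective C).
Proof. apply strictly_convex_plus; auto. apply linear_convex. Qed.

Lemma br_objective_grad (C x : path -> R) : rel_int P K x ->
  has_rel_grad P K (br_objective C) x (vadd C (g x)).
Proof. intros Hx. apply has_rel_grad_plus; auto. apply linear_grad. Qed.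

Lemma psi_interior_minimizer : exists pih, rel_int P K pih /\ is_min K (psi E P mu mu' h) pih.
Proof.
  destruct (exists_interior_minimizer P K (beckmann E P mu mu') h (beckmann_grad E P mu mu') g)
    as [pih [Hint Hmin]]; auto.
  - apply beckmann_convex; auto.
  - intros x Hx. apply beckmann_has_grad; auto. apply Hx.
  - intros x0 Kx0. apply beckmann_grad_locally_bounded; auto.
  - exists pih. split; [exact Hint| split; [apply Hint| exact Hmin]].
Qed.

Lemma best_response_interior (f : edge -> R) :
  rel_int P K (Fh E P mu mu' K h f) /\
  is_min K (br_objective (path_cost E (fun e => delay (mu e) (mu' e) (f e)))) (Fh E P mu mu' K h f).
Proof.
  set (C := path_cost E (fun e => delay (mu e) (mu' e) (f e))).
  destruct (exists_interior_minimizer P K (fun w => vdot P C w) h (fun _ => C) g)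
    as [w [Hint Hmin]]; auto.
  - apply linear_convex.
  - intros x _. apply linear_grad.
  - intros x0 _. exists (lsum P (fun p => Rabs (C p))), 1. split; [lra|]. intros y _ _ p Hp.
    apply (lsum_term P (fun p => Rabs (C p))); auto. intros; apply Rabs_pos.
  - assert (Hw : is_min K (br_objective C) w) by (split; [apply Hint| exact Hmin]).
    rewrite Fh_argmin. fold C.
    rewrite (argmin_eq K (br_objective C) K_convex w); auto.
    apply br_objective_strictly_convex.
Qed.

(** At an interior point [pi], [psi^h] and the best-response objective for
    the flows [A pi] have the same gradient, so [pi] is a fixed point of the
    best response exactly when it minimizes [psi^h]. *)
Lemma fixed_point_iff_min (pi : path -> R) : rel_int P K pi ->
  Fh E P mu mu' K h (Aflow P pi) = pi <-> is_min K (psi E P mu mu' h) pi.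
Proof.
  intros Hpi. assert (Kpi : K pi) by apply Hpi.
  set (C := path_cost E (fun e => delay (mu e) (mu' e) (Aflow P pi e))).
  rewrite (is_min_iff_gradient P K _ K_convex pi _ (strictly_convex_convex _ _ psi_strictly_convex)
             K_hyper Kpi (psi_grad pi Hpi)).
  change (beckmann_grad E P mu mu' pi) with C.
  rewrite <- (is_min_iff_gradient P K (br_objective C) K_convex pi _
                (strictly_convex_convex _ _ (br_objective_strictly_convex C))
                K_hyper Kpi (br_objective_grad C pi Hpi)).
  split.
  - intros Hfix. rewrite <- Hfix. apply best_response_interior.
  - intros Hmin. rewrite Fh_argmin. apply argmin_eq; auto. apply br_objective_strictly_convex.
Qed.

(** [Upsilon(pi)] is the monotonicity pairing of the gradient of [h] between
    [pi] and its best response [w]: positive unless [w = pi]. *)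
Lemma Upsilon_sign (pi : path -> R) : rel_int P K pi ->
  0 <= Upsilon E P mu mu' K h g pi /\
  (Upsilon E P mu mu' K h g pi = 0 <-> Fh E P mu mu' K h (Aflow P pi) = pi).
Proof.
  intros Hpi. assert (Kpi : K pi) by apply Hpi.
  destruct (best_response_interior (Aflow P pi)) as [Hw _].
  set (w := Fh E P mu mu' K h (Aflow P pi)) in *. assert (Kw : K w) by apply Hw.
  assert (HU : Upsilon E P mu mu' K h g pi = vdot P (vsub (g w) (g pi)) (vsub w pi)).
  { unfold Upsilon. fold w. rewrite !vdot_vsub_l, !vdot_Phi; auto; apply tangent_sub; auto. }
  rewrite HU. destruct (classic (w = pi)) as [Heq|Hne].
  - rewrite Heq. unfold vdot, vsub. rewrite (lsum_ext P _ (fun _ => 0)), lsum_zero by (intros; ring).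
    split; [lra| tauto].
  - pose proof (gradient_strictly_monotone P K h K_convex pi w (g pi) (g w) h_strict Kpi Kw
                  (K_hyper pi Kpi) (K_hyper w Kw) (not_eq_sym Hne) (h_grad pi Hpi) (h_grad w Hw)).
    split; [lra|]. split; [lra| contradiction].
Qed.

End Equilibrium.

Theorem mainTheorem12 (n : nat) (E : list edge) (mu mu' : edge -> R -> R)
    (P : list path) (Pih : (path -> R) -> Prop) (h : (path -> R) -> R)
    (g : (path -> R) -> path -> R) :
  network n E ->
  path_enum n E P ->
  (forall e, In e E -> flow_density (mu e) (mu' e)) ->
  mincut_gt1 n E mu ->
  admissible E P mu Pih h g ->
  strictly_convex_on Pih (psi E P mu mu' h) /\
  exists pih : path -> R,
    is_min Pih (psi E P mu mu' h) pih /\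
    (forall q, is_min Pih (psi E P mu mu' h) q -> q = pih) /\
    rel_int P Pih pih /\
    Fh E P mu mu' Pih h (Aflow P pih) = pih /\
    (forall pi, rel_int P Pih pi ->
       rel_int P Pih (Fh E P mu mu' Pih h (Aflow P pi)) /\
       0 <= Upsilon E P mu mu' Pih h g pi /\
       (Upsilon E P mu mu' Pih h g pi = 0 <-> pi = pih)).
Proof.
  (* The network structure and the min-cut condition only ensure that Pi is
     nonempty; admissibility of h already provides an interior point of Pi_h. *)
  intros _ _ Hfd _ [HK [Hcl [Hc [Hint [Hh [Hg [_ Hblow]]]]]]].
  pose proof (psi_strictly_convex E P mu mu' Pih h Hfd HK Hc Hh) as Hpsi.
  destruct (psi_interior_minimizer E P mu mu' Pih h g) as [pih [Hpint Hpmin]]; auto.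
  assert (Hunique : forall q, is_min Pih (psi E P mu mu' h) q -> q = pih)
    by (intros q Hq; apply (is_min_unique Pih _ Hc q pih Hpsi); auto).
  split; [exact Hpsi|]. exists pih.
  split; [exact Hpmin| split; [exact Hunique| split; [exact Hpint|]]].
  split; [apply (fixed_point_iff_min E P mu mu' Pih h g); auto|].
  intros pi Hpi.
  split; [apply (best_response_interior E P mu mu' Pih h g); auto|].
  destruct (Upsilon_sign E P mu mu' Pih h g HK Hcl Hc Hint Hh Hg Hblow pi Hpi) as [Hpos Hzero].
  split; [exact Hpos|]. rewrite Hzero, (fixed_point_iff_min E P mu mu' Pih h g); auto.
  split; [apply Hunique| intros ->; exact Hpmin].
Qed.
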